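(* Let $(X,T)$ be a topological dynamical system. Then the following conditions are equivalent: (1) $(X,T)$ is strongly proximal; (2) $(X,T)$ is proximal and uniquely ergodic; (3) $\operatorname{supp}(X,T)$ is a singleton; (4) $BP(X,T)=X^2$; (5) for every pair $(x,y)\in X^2$ and every $\varepsilon>0$, the set $\{n\in\mathbb{Z}_+:\ d(T^nx,T^ny)<\varepsilon\}$ has upper density one.
   Context: A topological dynamical system $(X,T)$ consists of a non-empty compact metric space $(X,d)$ and a continuous map $T:X\to X$ (not necessarily surjective). $\mathbb{Z}_+$ denotes the non-negative integers. For $F\subset\mathbb{Z}_+$, the upper density is $\overline{d}(F)=\limsup_{n\to\infty}\#(F\cap[0,n-1])/n$. A set $F\subset\mathbb{Z}_+$ has Banach density one if for every $\lambda<1$ there is $N\ge1$ such that $\#(F\cap I)\ge\lambda\,\#(I)$ for every interval $I\subset\mathbb{Z}_+$ of integers with $\#(I)\ge N$. A pair $(x,y)\in X^2$ is Banach proximal if for every $\varepsilon>0$ the set $\{n\in\mathbb{Z}_+: d(T^nx,T^ny)<\varepsilon\}$ has Banach density one; $BP(X,T)$ is the set of all Banach proximal pairs. A pair $(x,y)$ is proximal if $\liminf_{n\to\infty}d(T^nx,T^ny)=0$, and $(X,T)$ is proximal if every pair in $X^2$ is proximal. $M(X)$ denotes the space of Borel probability measures on $X$ with the weak$^*$ topology, $T_M:M(X)\to M(X)$ is the push-forward map $T_M\mu=\mu\circ T^{-1}$, and $(X,T)$ is strongly proximal if the system $(M(X),T_M)$ is proximal. $M(X,T)$ is the set of $T$-invariant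 Borel probability measures; $(X,T)$ is uniquely ergodic if $M(X,T)$ is a singleton. The support $\operatorname{supp}(\mu)$ of $\mu\in M(X)$ is the smallest closed set of full measure, and the support of the system, $\operatorname{supp}(X,T)$, is the smallest closed set $C\subset X$ with $\mu(C)=1$ for all $\mu\in M(X,T)$; equivalently $\operatorname{supp}(X,T)=\overline{\bigcup\{\operatorname{supp}(\mu):\mu\in M(X,T)\}}$. *)

From Stdlib Require Import Reals Lra List ClassicalEpsilon.
Open Scope R_scope.
Set Implicit Arguments.

Definition is_metric {X : Type} (d : X -> X -> R) : Prop :=
  (forall x y, 0 <= d x y) /\
  (forall x y, d x y = 0 <-> x = y) /\
  (forall x y, d x y = d y x) /\
  (forall x y z, d x z <= d x y + d y z).

Definition open_set {X : Type} (d : X -> X -> R) (U : X -> Prop) : Prop :=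
  forall x, U x -> exists r, 0 < r /\ forall y, d x y < r -> U y.

Definition closed_set {X : Type} (d : X -> X -> R) (C : X -> Prop) : Prop :=
  open_set d (fun x => ~ C x).

Definition compact_space {X : Type} (d : X -> X -> R) : Prop :=
  forall (I : Type) (U : I -> X -> Prop),
    (forall i, open_set d (U i)) -> (forall x, exists i, U i x) ->
    exists l : list I, forall x, exists i, In i l /\ U i x.

Definition continuous_map {X : Type} (d : X -> X -> R) (T : X -> X) : Prop :=
  forall x eps, 0 < eps ->
    exists delta, 0 < delta /\ forall y, d x y < delta -> d (T x) (T y) < eps.

Definition iter {X : Type} (T : X -> X) (n : nat) (x : X) : X := Nat.iter n T x.

Definition sigma_algebra {X : Type} (S : (X -> Prop) -> Prop) : Prop :=
  S (fun _ => True) /\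
  (forall A, S A -> S (fun x => ~ A x)) /\
  (forall A : nat -> X -> Prop, (forall n, S (A n)) -> S (fun x => exists n, A n x)).

Definition borel {X : Type} (d : X -> X -> R) (A : X -> Prop) : Prop :=
  forall S, sigma_algebra S -> (forall U, open_set d U -> S U) -> S A.

(** A Borel probability measure (values on non-Borel sets are irrelevant). *)
Record prob_measure {X : Type} (d : X -> X -> R) := {
  pm :> (X -> Prop) -> R;
  pm_nonneg : forall A, borel d A -> 0 <= pm A;
  pm_full : pm (fun _ => True) = 1;
  pm_sigma : forall A : nat -> X -> Prop,
      (forall n, borel d (A n)) ->
      (forall m n, m <> n -> forall x, A m x -> A n x -> False) ->
      infinite_sum (fun n => pm (A n)) (pm (fun x => exists n, A n x))
}.

(** (T_M)^n mu = mu o (T^n)^{-1} *)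
Definition pushn {X : Type} (T : X -> X) (n : nat) (mu : (X -> Prop) -> R)
  : (X -> Prop) -> R := fun A => mu (fun x => A (iter T n x)).

Definition invariant {X : Type} (d : X -> X -> R) (T : X -> X)
  (mu : prob_measure d) : Prop :=
  forall A, borel d A -> mu (fun x => A (T x)) = mu A.

Definition uniquely_ergodic {X : Type} (d : X -> X -> R) (T : X -> X) : Prop :=
  (exists mu : prob_measure d, invariant T mu) /\
  (forall mu nu : prob_measure d, invariant T mu -> invariant T nu ->
     forall A, borel d A -> mu A = nu A).

(** * Weak-* topology on M(X) via the Levy-Prokhorov metric
    pi(mu,nu) = inf { e > 0 | forall Borel A, mu A <= nu A^e + e and nu A <= mu A^e + e },
    which metrizes the weak-* topology on M(X) for X separable metric. *)
Definition eps_nbhd {X : Type} (d : X -> X -> R) (A : X -> Prop) (e : R) : X -> Prop :=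
  fun x => exists a, A a /\ d x a < e.

Definition prokhorov_le {X : Type} (d : X -> X -> R) (mu nu : (X -> Prop) -> R) (e : R)
  : Prop :=
  forall A, borel d A ->
    mu A <= nu (eps_nbhd d A e) + e /\ nu A <= mu (eps_nbhd d A e) + e.

(** pi(mu,nu) < e *)
Definition prokhorov_lt {X : Type} (d : X -> X -> R) (mu nu : (X -> Prop) -> R) (e : R)
  : Prop := exists e', 0 < e' /\ e' < e /\ prokhorov_le d mu nu e'.

Definition proximal_pair {X : Type} (d : X -> X -> R) (T : X -> X) (x y : X) : Prop :=
  forall eps, 0 < eps -> forall N : nat,
    exists n : nat, (N <= n)%nat /\ d (iter T n x) (iter T n y) < eps.

Definition proximal {X : Type} (d : X -> X -> R) (T : X -> X) : Prop :=
  forall x y, proximal_pair d T x y.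

(** (M(X), T_M) proximal, with M(X) metrized by the Prokhorov metric *)
Definition strongly_proximal {X : Type} (d : X -> X -> R) (T : X -> X) : Prop :=
  forall mu nu : prob_measure d, forall eps, 0 < eps -> forall N : nat,
    exists n : nat, (N <= n)%nat /\ prokhorov_lt d (pushn T n mu) (pushn T n nu) eps.

Definition is_system_support {X : Type} (d : X -> X -> R) (T : X -> X) (C : X -> Prop)
  : Prop :=
  closed_set d C /\
  (forall mu : prob_measure d, invariant T mu -> mu C = 1) /\
  (forall C', closed_set d C' ->
     (forall mu : prob_measure d, invariant T mu -> mu C' = 1) ->
     forall x, C x -> C' x).

Fixpoint count_in (F : nat -> Prop) (a L : nat) : nat :=
  match L with
  | O => O
  | S L' => (count_in F a L' +
             (if excluded_middle_informative (F (a + L')%nat) then 1 else 0))%nat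
  end.

Definition banach_density_one (F : nat -> Prop) : Prop :=
  forall lam, lam < 1 -> exists N : nat, (1 <= N)%nat /\
    forall a L : nat, (N <= L)%nat -> lam * INR L <= INR (count_in F a L).

Definition upper_density_is (F : nat -> Prop) (l : R) : Prop :=
  forall delta, 0 < delta ->
    (exists N : nat, forall n : nat, (N <= n)%nat -> (1 <= n)%nat ->
        INR (count_in F 0 n) / INR n < l + delta) /\
    (forall N : nat, exists n : nat, (N <= n)%nat /\ (1 <= n)%nat /\
        l - delta < INR (count_in F 0 n) / INR n).

Definition banach_proximal {X : Type} (d : X -> X -> R) (T : X -> X) (x y : X) : Prop :=
  forall eps, 0 < eps ->
    banach_density_one (fun n => d (iter T n x) (iter T n y) < eps).

(* Proximality plus compactness gives a fixed point p, and every condition of the theorem turns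
   out to say that the system collapses onto p.  (1) => (2): T_M brings the Dirac masses at x and y
   together, and Prokhorov-closeness of T^n mu = mu to T^n (dirac p) = dirac p forces every
   invariant mu to be dirac p.  (2) => (3) is then immediate.  (3) => (4): if T^n x stayed
   eps-away from p on a set of positive upper Banach density, the starting points of long windows
   of far times have a limit point u whose orbit is eps-away from p with lower density c > 0 on
   every initial segment; a Krylov-Bogolyubov limit of empirical measures along u is then an
   invariant measure charging {w | eps <= d w p}.  (4) => (1): the average over n < m of
   mu {x | T^n x is far from p} tends to 0, so for many n both T^n mu and T^n nu are concentrated
   near p, hence Prokhorov-close.  (4) <=> (5): the same limit-pair argument turns a failure of
   Banach density one into a pair whose close-return set has upper density below one. *)

From Stdlib Require Import Reals Lra Lia ZArith List Cantor.
From Stdlib Require Import Classical ClassicalEpsilon FunctionalExtensionality PropExtensionality.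
Open Scope R_scope.

Lemma pred_ext {X : Type} (A B : X -> Prop) : (forall x, A x <-> B x) -> A = B.
Proof. intro H; apply functional_extensionality; intro x; apply propositional_extensionality; auto. Qed.

Lemma eventually_inv_succ_lt e : 0 < e -> exists J, forall j, (J <= j)%nat -> / INR (S j) < e.
Proof.
  intros He. destruct (archimed (/ e)) as [h _].
  assert (0 <= IZR (up (/e))). { assert (0 < /e) by (apply Rinv_0_lt_compat; auto). lra. }
  exists (Z.to_nat (up (/ e))). intros j Hj.
  assert (Hj' : IZR (up (/e)) <= INR j).
  { rewrite <- (Z2Nat.id (up (/e))) by (apply le_IZR; auto). rewrite <- INR_IZR_INZ. apply le_INR; auto. }
  rewrite S_INR. assert (0 < INR j + 1) by (assert (0 <= INR j) by apply pos_INR; lra).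
  apply (Rmult_lt_reg_r (INR j + 1)); auto. rewrite Rinv_l by lra.
  apply (Rmult_lt_reg_l (/ e)). apply Rinv_0_lt_compat; auto.
  rewrite Rmult_1_r, <- Rmult_assoc, Rinv_l by lra. lra.
Qed.

Lemma inv_succ_pos k : 0 < / INR (S k).
Proof. apply Rinv_0_lt_compat, lt_0_INR; lia. Qed.

Lemma count_in_ext (F G : nat -> Prop) a L :
  (forall k, (k < L)%nat -> (F (a+k)%nat <-> G (a+k)%nat)) -> count_in F a L = count_in G a L.
Proof.
  induction L; simpl; intros H; auto.
  rewrite IHL by (intros; apply H; lia).
  destruct (excluded_middle_informative (F (a+L)%nat)), (excluded_middle_informative (G (a+L)%nat)); auto;
    exfalso; [apply n | apply n]; apply H; auto; lia.
Qed.

Lemma count_in_mono (F G : nat -> Prop) a L :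
  (forall k, (k < L)%nat -> F (a+k)%nat -> G (a+k)%nat) -> (count_in F a L <= count_in G a L)%nat.
Proof.
  induction L; simpl; intros H; auto.
  assert (IH := IHL ltac:(intros; apply H; auto; lia)).
  destruct (excluded_middle_informative (F (a+L)%nat)), (excluded_middle_informative (G (a+L)%nat)); try lia.
  exfalso; apply n; apply H; auto.
Qed.

Lemma count_in_le F a L : (count_in F a L <= L)%nat.
Proof. induction L; simpl; auto. destruct excluded_middle_informative; lia. Qed.

Lemma count_in_all F a L : (forall n, F n) -> count_in F a L = L.
Proof. intro H; induction L; simpl; auto. destruct excluded_middle_informative; [lia|]. exfalso; auto. Qed.

Lemma count_in_none F a L : (forall n, ~ F n) -> count_in F a L = 0%nat.
Proof. intro H; induction L; simpl; auto. destruct excluded_middle_informative as [h|_]; [destruct (H _ h)|lia]. Qed.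

Lemma count_in_add F a j l : count_in F a (j + l) = (count_in F a j + count_in F (a+j) l)%nat.
Proof.
  induction l; simpl.
  - rewrite Nat.add_0_r; lia.
  - replace (j + S l)%nat with (S (j + l)) by lia. simpl. rewrite IHl.
    replace (a + (j + l))%nat with (a + j + l)%nat by lia. lia.
Qed.

Lemma count_in_compl F a L : (count_in F a L + count_in (fun n => ~ F n) a L)%nat = L.
Proof.
  induction L; simpl; auto.
  destruct (excluded_middle_informative (F (a+L)%nat)), (excluded_middle_informative (~ F (a+L)%nat));
    try tauto; lia.
Qed.

Lemma count_in_or F G a L :
  (count_in (fun n => F n \/ G n) a L <= count_in F a L + count_in G a L)%nat.
Proof.
  induction L; simpl; auto.
  destruct (excluded_middle_informative (F (a+L)%nat \/ G (a+L)%nat)),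
    (excluded_middle_informative (F (a+L)%nat)), (excluded_middle_informative (G (a+L)%nat)); try tauto; lia.
Qed.

Lemma count_in_or_disjoint F G a L : (forall n, F n -> G n -> False) ->
  count_in (fun n => F n \/ G n) a L = (count_in F a L + count_in G a L)%nat.
Proof.
  intro D; induction L; simpl; auto.
  destruct (excluded_middle_informative (F (a+L)%nat \/ G (a+L)%nat)),
    (excluded_middle_informative (F (a+L)%nat)), (excluded_middle_informative (G (a+L)%nat));
    try tauto; try lia.
  exfalso; eauto.
Qed.

Lemma count_in_and (P Q : nat -> Prop) a L :
  (count_in P a L + count_in Q a L <= count_in (fun n => P n /\ Q n) a L + L)%nat.
Proof.
  assert (h1 := count_in_compl P a L). assert (h2 := count_in_compl Q a L).
  assert (h3 := count_in_compl (fun n => P n /\ Q n) a L).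
  assert (h4 := count_in_or (fun n => ~ P n) (fun n => ~ Q n) a L).
  assert (h5 : count_in (fun n => ~ (P n /\ Q n)) a L = count_in (fun n => ~ P n \/ ~ Q n) a L)
    by (apply count_in_ext; intros; tauto).
  lia.
Qed.

Lemma count_in_shift F a L : count_in F a L = count_in (fun n => F (a+n)%nat) 0 L.
Proof. induction L; simpl; try rewrite IHL; auto. Qed.

Lemma count_in_start1 F L :
  (count_in F 0 L <= count_in F 1 L + 1)%nat /\ (count_in F 1 L <= count_in F 0 L + 1)%nat.
Proof.
  assert (H1 := count_in_add F 0 1 L). assert (H2 := count_in_add F 0 L 1).
  replace (1 + L)%nat with (L + 1)%nat in H1 by lia. rewrite H2 in H1.
  assert (count_in F 0 1 <= 1)%nat by apply count_in_le.
  assert (count_in F (0+L) 1 <= 1)%nat by apply count_in_le.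
  change (0+1)%nat with 1%nat in H1. lia.
Qed.

Lemma count_in_pos_witness (P : nat -> Prop) a L :
  (0 < count_in P a L)%nat -> exists k, (k < L)%nat /\ P (a + k)%nat.
Proof.
  induction L; simpl; intro h. lia. destruct excluded_middle_informative as [hp|hp].
  exists L; split; auto. destruct (IHL ltac:(lia)) as [k [hk hk']]. exists k; split; auto.
Qed.

Lemma banach_density_one_unbounded (P : nat -> Prop) :
  banach_density_one P -> forall N, exists n, (N <= n)%nat /\ P n.
Proof.
  intros H N. destruct (H (1/2) ltac:(lra)) as [N0 [hN0 HN0]].
  specialize (HN0 N N0 (le_n _)). assert (0 < INR N0) by (apply lt_0_INR; lia).
  assert (h : (0 < count_in P N N0)%nat) by (apply INR_lt; simpl; lra).
  destruct (count_in_pos_witness P N N0 h) as [k [_ hk]]. exists (N + k)%nat; split; auto; lia.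
Qed.

Lemma banach_density_one_and (P Q S : nat -> Prop) :
  banach_density_one P -> banach_density_one Q -> (forall n, P n -> Q n -> S n) ->
  banach_density_one S.
Proof.
  intros HP HQ H lam hlam. destruct (HP ((1 + lam)/2) ltac:(lra)) as [N1 [h1 H1]].
  destruct (HQ ((1 + lam)/2) ltac:(lra)) as [N2 [h2 H2]].
  exists (Nat.max N1 N2). split; [lia|]. intros a L hL.
  specialize (H1 a L ltac:(lia)). specialize (H2 a L ltac:(lia)).
  assert (h := count_in_and P Q a L). apply le_INR in h. rewrite !plus_INR in h.
  assert (h' : (count_in (fun n => P n /\ Q n) a L <= count_in S a L)%nat)
    by (apply count_in_mono; intros k _ [hp hq]; auto).
  apply le_INR in h'. lra.
Qed.

Lemma not_banach_density_one (P : nat -> Prop) : ~ banach_density_one P ->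
  exists lam, lam < 1 /\ forall N, (1 <= N)%nat ->
    exists a L, (N <= L)%nat /\ INR (count_in P a L) < lam * INR L.
Proof.
  intro H. apply NNPP; intro H'. apply H. intros lam hlam. apply NNPP; intro h1. apply H'.
  exists lam; split; auto. intros N hN. apply NNPP; intro h2. apply h1. exists N; split; auto.
  intros a L hL. apply Rnot_lt_le. intro h3. apply h2. exists a, L; auto.
Qed.

Section Metric.
Context {X : Type}.
Variable d : X -> X -> R.
Hypothesis Hd : is_metric d.

Lemma dist_nonneg x y : 0 <= d x y. Proof. apply (proj1 Hd). Qed.
Lemma dist_eq0 x y : d x y = 0 <-> x = y. Proof. apply (proj1 (proj2 Hd)). Qed.
Lemma dist_sym x y : d x y = d y x. Proof. apply (proj1 (proj2 (proj2 Hd))). Qed.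
Lemma dist_triangle x y z : d x z <= d x y + d y z. Proof. apply (proj2 (proj2 (proj2 Hd))). Qed.
Lemma dist_refl x : d x x = 0. Proof. apply dist_eq0; auto. Qed.

Lemma dist_pos x y : x <> y -> 0 < d x y.
Proof.
  intro H. destruct (dist_nonneg x y) as [h|h]; auto. exfalso; apply H, dist_eq0; auto.
Qed.

Lemma dist_small_eq x y : (forall e, 0 < e -> d x y < e) -> x = y.
Proof.
  intro H. destruct (classic (x = y)) as [|n]; auto.
  assert (h := dist_pos x y n). specialize (H _ h). lra.
Qed.

Lemma open_ext (U V : X -> Prop) : (forall x, U x <-> V x) -> open_set d U -> open_set d V.
Proof. intros H; rewrite (pred_ext U V H); auto. Qed.

Lemma closed_ext (U V : X -> Prop) : (forall x, U x <-> V x) -> closed_set d U -> closed_set d V.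
Proof. intros H; rewrite (pred_ext U V H); auto. Qed.

Lemma open_ball c r : open_set d (fun y => d y c < r).
Proof.
  intros x Hx. exists (r - d x c). split; [lra|].
  intros y Hy. assert (h := dist_triangle y x c). rewrite (dist_sym y x) in h. lra.
Qed.

Lemma open_empty : open_set d (fun _ => False).
Proof. intros x []. Qed.

Lemma open_full : open_set d (fun _ => True).
Proof. intros x _. exists 1; split; auto; lra. Qed.

Lemma open_union {I : Type} (U : I -> X -> Prop) : (forall i, open_set d (U i)) ->
  open_set d (fun x => exists i, U i x).
Proof.
  intros H x [i Hi]. destruct (H i x Hi) as [r [Hr H']]. exists r; split; auto.
  intros y Hy; exists i; auto.
Qed.

Lemma open_inter U V : open_set d U -> open_set d V -> open_set d (fun x => U x /\ V x).
Proof.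
  intros HU HV x [Ux Vx]. destruct (HU x Ux) as [r1 [H1 H1']]. destruct (HV x Vx) as [r2 [H2 H2']].
  exists (Rmin r1 r2). split. apply Rmin_pos; auto.
  intros y Hy. split; [apply H1' | apply H2']; eapply Rlt_le_trans; eauto; [apply Rmin_l|apply Rmin_r].
Qed.

Lemma closed_compl_open U : open_set d U -> closed_set d (fun x => ~ U x).
Proof.
  intros H. unfold closed_set. eapply open_ext; [|exact H].
  intro x; split; intro h; [intro h'; auto| apply NNPP; auto].
Qed.

Lemma closed_cball c r : closed_set d (fun y => d y c <= r).
Proof.
  intros x Hx. exists (d x c - r). split; [lra|].
  intros y Hy Hy'. assert (h := dist_triangle x y c). lra.
Qed.

Lemma closed_dist_ge c r : closed_set d (fun y => r <= d y c).
Proof.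
  eapply closed_ext; [|apply closed_compl_open, (open_ball c r)]. intro x; split; intro h; lra.
Qed.

Lemma closed_point c : closed_set d (fun y => y = c).
Proof.
  intros x Hx. exists (d x c). split. apply dist_pos; auto.
  intros y Hy Hy'. subst. lra.
Qed.

Lemma closed_empty : closed_set d (fun _ => False).
Proof. apply (closed_ext (fun x => ~ True)); [tauto|]. apply closed_compl_open, open_full. Qed.

Lemma closed_union U V : closed_set d U -> closed_set d V -> closed_set d (fun x => U x \/ V x).
Proof.
  intros HU HV. unfold closed_set. eapply open_ext; [|apply (open_inter _ _ HU HV)]. intros x; tauto.
Qed.

Lemma open_preimage (g : X -> X) U :
  continuous_map d g -> open_set d U -> open_set d (fun x => U (g x)).
Proof.
  intros Hg HU x Ux. destruct (HU _ Ux) as [r [Hr H]]. destruct (Hg x r Hr) as [del [Hdel H']].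
  exists del; split; auto.
Qed.

Lemma closed_preimage (g : X -> X) U :
  continuous_map d g -> closed_set d U -> closed_set d (fun x => U (g x)).
Proof. intros Hg HU. apply (open_preimage g _ Hg HU). Qed.

Lemma continuous_id : continuous_map d (fun x => x).
Proof. intros x e He. exists e; auto. Qed.

Lemma continuous_comp f g :
  continuous_map d f -> continuous_map d g -> continuous_map d (fun x => f (g x)).
Proof.
  intros Hf Hg x e He. destruct (Hf (g x) e He) as [e1 [He1 H1]]. destruct (Hg x e1 He1) as [e2 [He2 H2]].
  exists e2; split; auto.
Qed.

Hypothesis Hcpt : compact_space d.

Fixpoint somes {I : Type} (l : list (option I)) : list I :=
  match l with nil => nil | Some i :: l' => i :: somes l' | None :: l' => somes l' end.

Lemma in_somes {I : Type} (l : list (option I)) i : In (Some i) l -> In i (somes l).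
Proof.
  induction l as [|[j|] l IH]; simpl; auto; intros [h|h]; try discriminate; auto. inversion h; auto.
Qed.

Lemma compact_closed_cover (K : X -> Prop) {I : Type} (V : I -> X -> Prop) :
  closed_set d K -> (forall i, open_set d (V i)) -> (forall x, K x -> exists i, V i x) ->
  exists l : list I, forall x, K x -> exists i, In i l /\ V i x.
Proof.
  intros HK HV Hc.
  destruct (Hcpt (option I) (fun o => match o with None => fun x => ~ K x | Some i => V i end))
    as [l Hl].
  - intros [i|]; auto.
  - intro x. destruct (classic (K x)) as [h|h].
    + destruct (Hc x h) as [i Hi]. exists (Some i); auto.
    + exists None; auto.
  - exists (somes l). intros x Kx. destruct (Hl x) as [[i|] [H1 H2]]; [|contradiction].
    exists i; split; auto. apply in_somes; auto.
Qed.

Lemma finite_net e : 0 < e -> exists l : list X, forall x, exists c, In c l /\ d x c < e.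
Proof.
  intros He. destruct (Hcpt X (fun c x => d x c < e)) as [l Hl].
  - intro c; apply open_ball.
  - intro x; exists x. rewrite dist_refl; auto.
  - exists l; auto.
Qed.

Definition cluster_point (s : nat -> X) (u : X) : Prop :=
  forall r, 0 < r -> forall K, exists k, (K <= k)%nat /\ d (s k) u < r.

(* A point with no cluster point would have a neighbourhood visited only finitely often;
   a finite subcover of these neighbourhoods has a last visit time. *)
Lemma cluster_point_exists (s : nat -> X) : exists u, cluster_point s u.
Proof.
  apply NNPP; intro Hn.
  assert (H : forall u, exists r K, 0 < r /\ forall k, (K <= k)%nat -> r <= d (s k) u).
  { intro u. apply NNPP; intro h. apply Hn; exists u. intros r Hr K. apply NNPP; intro h2.
    apply h. exists r, K. split; auto. intros k Hk. apply Rnot_lt_le. intro h3. apply h2. exists k; auto. }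
  destruct (Hcpt (X * R * nat)%type (fun p y => let '(u, r, K) := p in
     (0 < r /\ forall k, (K <= k)%nat -> r <= d (s k) u) /\ d y u < r)) as [l Hl].
  - intros [[u r] K]. destruct (classic (0 < r /\ forall k, (K <= k)%nat -> r <= d (s k) u)) as [h|h].
    + eapply open_ext; [|apply (open_ball u r)]. intro y; simpl; tauto.
    + eapply open_ext; [|apply open_empty]. intro y; simpl; tauto.
  - intro x. destruct (H x) as [r [K [Hr HK]]]. exists (x, r, K). simpl. rewrite dist_refl. auto.
  - set (K0 := fold_right (fun p m => Nat.max (snd p) m) 0%nat l).
    assert (HK0 : forall p, In p l -> (snd p <= K0)%nat).
    { unfold K0; clear; induction l; simpl; [tauto|]. intros p [h|h]; subst; [lia|]. specialize (IHl p h). lia. }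
    destruct (Hl (s K0)) as [[[u r] K] [Hin [[Hr HK] Hu]]].
    specialize (HK _ (HK0 _ Hin)). lra.
Qed.

Lemma cluster_point_subseq (s : nat -> X) u : cluster_point s u ->
  exists sig : nat -> nat, (forall j, (j <= sig j)%nat) /\ forall j, d (s (sig j)) u < / INR (S j).
Proof.
  intro H.
  assert (H' : forall j, exists k, (j <= k)%nat /\ d (s k) u < / INR (S j)) by (intro j; apply H, inv_succ_pos).
  exists (fun j => proj1_sig (constructive_indefinite_description _ (H' j))).
  split; intro j; destruct (constructive_indefinite_description _ (H' j)) as [k [h1 h2]]; simpl; auto.
Qed.

Lemma common_cluster_point (s1 s2 : nat -> X) : exists u v, forall r, 0 < r -> forall K, exists k,
  (K <= k)%nat /\ d (s1 k) u < r /\ d (s2 k) v < r.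
Proof.
  destruct (cluster_point_exists s1) as [u Hu]. destruct (cluster_point_subseq s1 u Hu) as [sig [Hs1 Hs2]].
  destruct (cluster_point_exists (fun j => s2 (sig j))) as [v Hv]. exists u, v. intros r Hr K.
  destruct (eventually_inv_succ_lt r Hr) as [J HJ]. destruct (Hv r Hr (Nat.max K J)) as [j [Hj1 Hj2]].
  exists (sig j). split. specialize (Hs1 j); lia. split; auto.
  eapply Rlt_trans; [apply Hs2|]. apply HJ; lia.
Qed.

End Metric.

Section Borel.
Context {X : Type}.
Variable d : X -> X -> R.

Lemma borel_open U : open_set d U -> borel d U.
Proof. intros H S HS HO. auto. Qed.

Lemma borel_compl A : borel d A -> borel d (fun x => ~ A x).
Proof. intros H S HS HO. apply (proj1 (proj2 HS)). apply H; auto. Qed.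

Lemma borel_countable_union (A : nat -> X -> Prop) :
  (forall n, borel d (A n)) -> borel d (fun x => exists n, A n x).
Proof. intros H S HS HO. apply (proj2 (proj2 HS)). intro n; apply H; auto. Qed.

Lemma borel_full : borel d (fun _ => True).
Proof. intros S HS HO. apply HS. Qed.

Lemma borel_ext A B : (forall x, A x <-> B x) -> borel d A -> borel d B.
Proof. intros H; rewrite (pred_ext A B H); auto. Qed.

Lemma borel_closed C : closed_set d C -> borel d C.
Proof.
  intros H. apply (borel_ext (fun x => ~ ~ C x)). intro x; split; [apply NNPP|tauto].
  apply borel_compl, borel_open, H.
Qed.

Lemma borel_const (P : Prop) : borel d (fun _ => P).
Proof.
  apply (borel_ext (fun _ => ~ ~ P)); [intro; split; [apply NNPP|tauto]|].
  destruct (classic P) as [h|h].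
  - apply (borel_ext (fun _ => True)); [tauto|apply borel_full].
  - apply (borel_ext (fun _ => ~ True)); [tauto|]. apply borel_compl, borel_full.
Qed.

Lemma borel_empty : borel d (fun _ => False).
Proof. apply borel_const. Qed.

Lemma borel_union A B : borel d A -> borel d B -> borel d (fun x => A x \/ B x).
Proof.
  intros HA HB. apply (borel_ext (fun x => exists n : nat, match n with O => A x | _ => B x end)).
  - intro x; split; [intros [[|n] h]; auto | intros [h|h]; [exists O|exists 1%nat]; auto].
  - apply borel_countable_union. intros [|n]; auto.
Qed.

Lemma borel_inter A B : borel d A -> borel d B -> borel d (fun x => A x /\ B x).
Proof.
  intros HA HB. apply (borel_ext (fun x => ~ (~ A x \/ ~ B x))); [intro x; tauto|].
  apply borel_compl, borel_union; apply borel_compl; auto.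
Qed.

Lemma borel_preimage (g : X -> X) A :
  continuous_map d g -> borel d A -> borel d (fun x => A (g x)).
Proof.
  intros Hg HA. apply (HA (fun B => borel d (fun x => B (g x)))).
  - split; [apply borel_full|split].
    + intros B HB. apply borel_compl; auto.
    + intros B HB. apply (borel_countable_union (fun n x => B n (g x))); auto.
  - intros U HU. apply borel_open, open_preimage; auto.
Qed.

End Borel.

Lemma sum_f_R0_const c N : sum_f_R0 (fun _ => c) N = INR (S N) * c.
Proof. induction N; simpl sum_f_R0. simpl; lra. rewrite IHN. rewrite (S_INR (S N)). lra. Qed.

Lemma infinite_sum_finite (f : nat -> R) n :
  (forall k, (n < k)%nat -> f k = 0) -> infinite_sum f (sum_f_R0 f n).
Proof.
  intros Hf e He. exists n. intros N HN.
  replace (sum_f_R0 f N) with (sum_f_R0 f n).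
  - unfold Rdist. rewrite Rminus_diag, Rabs_R0; lra.
  - induction HN as [|N HN IH]; auto. simpl. rewrite <- IH, Hf by lia. ring.
Qed.

Section Measure.
Context {X : Type} {d : X -> X -> R}.
Variable mu : prob_measure d.

Lemma pm_ext A B : (forall x, A x <-> B x) -> mu A = mu B.
Proof. intros H; rewrite (pred_ext A B H); auto. Qed.

(* sigma-additivity for the constant family [fun _ => empty] forces mu(empty) = 0 *)
Lemma pm_empty : mu (fun _ => False) = 0.
Proof.
  assert (H := pm_sigma mu (fun _ _ => False) (fun _ => borel_empty d) ltac:(tauto)). cbv beta in H.
  rewrite (pm_ext (fun x => exists _ : nat, False) (fun _ => False)) in H
    by (intro; split; [intros [_ h]; auto|tauto]).
  set (c := mu (fun _ => False)) in *.
  destruct (Req_dec c 0) as [|hc]; auto. exfalso.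
  destruct (H (Rabs c / 2)) as [N HN]. { assert (0 < Rabs c) by (apply Rabs_pos_lt; auto). lra. }
  assert (h1 := HN N ltac:(lia)). assert (h2 := HN (S N) ltac:(lia)).
  unfold Rdist in *. rewrite sum_f_R0_const in h1, h2. rewrite S_INR in h2.
  assert (h3 : Rabs ((INR (S N) + 1) * c - c - (INR (S N) * c - c))
               <= Rabs ((INR (S N) + 1) * c - c) + Rabs (INR (S N) * c - c)).
  { unfold Rminus at 1. rewrite <- (Rabs_Ropp (INR (S N) * c - c)). apply Rabs_triang. }
  replace ((INR (S N) + 1) * c - c - (INR (S N) * c - c)) with c in h3 by ring. lra.
Qed.

Lemma pm_add A B : borel d A -> borel d B -> (forall x, A x -> B x -> False) ->
  mu (fun x => A x \/ B x) = mu A + mu B.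
Proof.
  intros HA HB D.
  set (F := fun n : nat => match n with O => A | 1%nat => B | _ => fun _ => False end).
  assert (H := pm_sigma mu F ltac:(intros [|[|n]]; simpl; auto; apply borel_empty)
     ltac:(intros [|[|m]] [|[|n]] hmn x; simpl; try tauto; eauto)).
  rewrite (pm_ext (fun x => exists n, F n x) (fun x => A x \/ B x)) in H.
  - apply (uniqueness_sum _ _ _ H). replace (mu A + mu B) with (sum_f_R0 (fun n => mu (F n)) 1) by (simpl; ring).
    apply infinite_sum_finite. intros [|[|k]] hk; try lia. apply pm_empty.
  - intro x; split; [intros [[|[|n]] h]; simpl in h; tauto|].
    intros [h|h]; [exists O|exists 1%nat]; auto.
Qed.

Lemma pm_compl A : borel d A -> mu (fun x => ~ A x) = 1 - mu A.
Proof.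
  intros HA. rewrite <- (pm_full mu).
  rewrite (pm_ext (fun _ => True) (fun x => A x \/ ~ A x)) by (intro; tauto).
  rewrite pm_add; auto. ring. apply borel_compl; auto.
Qed.

Lemma pm_mono A B : borel d A -> borel d B -> (forall x, A x -> B x) -> mu A <= mu B.
Proof.
  intros HA HB H.
  assert (HC : borel d (fun x => B x /\ ~ A x)) by (apply borel_inter; auto; apply borel_compl; auto).
  rewrite (pm_ext B (fun x => A x \/ (B x /\ ~ A x))).
  - rewrite pm_add; auto; [|intros x h [_ h']; auto].
    assert (0 <= mu (fun x => B x /\ ~ A x)) by (apply pm_nonneg; auto). lra.
  - intro x; split; [|intros [h|[h _]]; auto]. intro h. destruct (classic (A x)); auto.
Qed.

Lemma pm_le1 A : borel d A -> mu A <= 1.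
Proof. intro HA. rewrite <- (pm_full mu). apply pm_mono; auto. apply borel_full. Qed.

Lemma pm_full_set A : (forall x, A x) -> mu A = 1.
Proof. intro H. rewrite <- (pm_full mu). apply pm_ext. intro; split; auto. Qed.

Lemma pm_empty_set A : (forall x, ~ A x) -> mu A = 0.
Proof. intro H. rewrite <- pm_empty. apply pm_ext. intro x; split; [apply H|intros []]. Qed.

Lemma pm_continuous_increasing (A : nat -> X -> Prop) :
  (forall n, borel d (A n)) -> (forall n x, A n x -> A (S n) x) ->
  forall e, 0 < e -> exists N, mu (fun x => exists n, A n x) - e < mu (A N).
Proof.
  intros HA Hinc e He.
  set (D := fun n : nat => match n with O => A O | S m => fun x => A (S m) x /\ ~ A m x end).
  assert (HD : forall n, borel d (D n)).
  { intros [|n]; simpl; auto. apply borel_inter; auto. apply borel_compl; auto. }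
  assert (Hmono : forall m n, (m <= n)%nat -> forall x, A m x -> A n x) by (intros m n h; induction h; auto).
  assert (Hdisj : forall m n, m <> n -> forall x, D m x -> D n x -> False).
  { intros m n hmn x. destruct m as [|m], n as [|n]; simpl; try lia.
    - intros h [_ h']. apply h', (Hmono 0%nat); auto; lia.
    - intros [_ h'] h. apply h', (Hmono 0%nat); auto; lia.
    - intros [h1 h2] [h3 h4]. destruct (Nat.lt_total m n) as [h|[h|h]]; try lia.
      + apply h4, (Hmono (S m)); auto; lia.
      + apply h2, (Hmono (S n)); auto; lia. }
  assert (Hps : forall N, sum_f_R0 (fun n => mu (D n)) N = mu (A N)).
  { induction N; simpl; auto. rewrite IHN.
    rewrite (pm_ext (A (S N)) (fun x => A N x \/ (A (S N) x /\ ~ A N x))).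
    - rewrite pm_add; auto. apply (HD (S N)). intros x h [_ h']; auto.
    - intro x; split; [intro h; destruct (classic (A N x)); auto | intros [h|[h _]]; auto]. }
  assert (H := pm_sigma mu D HD Hdisj).
  rewrite (pm_ext (fun x => exists n, D n x) (fun x => exists n, A n x)) in H.
  - destruct (H e He) as [N HN]. exists N. specialize (HN N ltac:(lia)). rewrite Hps in HN.
    unfold Rdist in HN. apply Rabs_def2 in HN. lra.
  - intro x; split.
    + intros [[|n] h]; simpl in h. exists O; auto. exists (S n); tauto.
    + intros [n h]. induction n. exists O; auto.
      destruct (classic (A n x)) as [h'|h']; auto. exists (S n); simpl; auto.
Qed.

Lemma pm_continuous_decreasing (B : nat -> X -> Prop) :
  (forall n, borel d (B n)) -> (forall n x, B (S n) x -> B n x) ->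
  (forall x, exists n, ~ B n x) -> forall e, 0 < e -> exists N, mu (B N) < e.
Proof.
  intros HB Hdec Hx e He.
  destruct (pm_continuous_increasing (fun n x => ~ B n x) ltac:(intro; apply borel_compl; auto)
     ltac:(intros n x h h'; apply h, Hdec; auto) e He) as [N HN].
  exists N. rewrite pm_full_set in HN by auto. rewrite pm_compl in HN; auto. lra.
Qed.

End Measure.

Section Dirac.
Context {X : Type}.
Variable d : X -> X -> R.

Definition dirac_f (p : X) (A : X -> Prop) : R := if excluded_middle_informative (A p) then 1 else 0.

Lemma dirac_sigma p (A : nat -> X -> Prop) : (forall m n, m <> n -> forall x, A m x -> A n x -> False) ->
  infinite_sum (fun n => dirac_f p (A n)) (dirac_f p (fun x => exists n, A n x)).
Proof.
  intro D. assert (Z : forall n k, A n p -> k <> n -> dirac_f p (A k) = 0).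
  { intros n k hn hk. unfold dirac_f. destruct excluded_middle_informative; auto.
    exfalso; apply (D n k ltac:(lia) p); auto. }
  unfold dirac_f at 2. destruct excluded_middle_informative as [[n0 h0]|hn].
  - replace 1 with (sum_f_R0 (fun n => dirac_f p (A n)) n0).
    + apply infinite_sum_finite. intros k hk. apply (Z n0); auto; lia.
    + assert (H : forall N, (N < n0)%nat -> sum_f_R0 (fun n => dirac_f p (A n)) N = 0).
      { induction N; intro h; simpl. apply (Z n0); auto; lia. rewrite IHN, (Z n0); [ring|..]; auto; lia. }
      assert (E : dirac_f p (A n0) = 1) by (unfold dirac_f; destruct excluded_middle_informative; tauto).
      destruct n0; simpl; auto. rewrite H, E by lia. ring.
  - replace 0 with (sum_f_R0 (fun n => dirac_f p (A n)) 0).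
    + apply infinite_sum_finite. intros k hk. unfold dirac_f; destruct excluded_middle_informative; auto.
      exfalso; eauto.
    + simpl. unfold dirac_f; destruct excluded_middle_informative; auto. exfalso; eauto.
Qed.

Definition dirac (p : X) : prob_measure d.
Proof.
  refine {| pm := dirac_f p |}.
  - intros A _. unfold dirac_f; destruct excluded_middle_informative; lra.
  - unfold dirac_f; destruct excluded_middle_informative; tauto.
  - intros A _ D. apply dirac_sigma; auto.
Defined.

End Dirac.

(* total versions: junk value 0 for a set that is empty or unbounded *)
Definition sup_of (E : R -> Prop) : R :=
  match excluded_middle_informative (bound E /\ exists x, E x) with
  | left h => proj1_sig (completeness E (proj1 h) (proj2 h))
  | right _ => 0 end.

Lemma sup_of_ub (E : R -> Prop) b e : (forall x, E x -> x <= b) -> E e -> e <= sup_of E.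
Proof.
  intros Hb He. unfold sup_of. destruct excluded_middle_informative as [h|h].
  - destruct (completeness E _ _) as [m [Hm1 Hm2]]. simpl. apply Hm1; auto.
  - exfalso; apply h. split; eauto. exists b; intros x hx; auto.
Qed.

Lemma sup_of_least (E : R -> Prop) b : (exists x, E x) -> (forall x, E x -> x <= b) -> sup_of E <= b.
Proof.
  intros Hne Hb. unfold sup_of. destruct excluded_middle_informative as [h|h].
  - destruct (completeness E _ _) as [m [Hm1 Hm2]]. simpl. apply Hm2. intros x hx; auto.
  - exfalso; apply h. split; eauto. exists b; intros x hx; auto.
Qed.

Definition inf_of (E : R -> Prop) : R := - sup_of (fun r => E (- r)).

Lemma inf_of_lb (E : R -> Prop) b e : (forall x, E x -> b <= x) -> E e -> inf_of E <= e.
Proof.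
  intros Hb He. unfold inf_of. assert (- e <= sup_of (fun r => E (-r))); [|lra].
  apply (sup_of_ub _ (- b)); [intros x hx; specialize (Hb _ hx); lra|]. rewrite Ropp_involutive; auto.
Qed.

Lemma inf_of_greatest (E : R -> Prop) b : (exists x, E x) -> (forall x, E x -> b <= x) -> b <= inf_of E.
Proof.
  intros [e He] Hb. unfold inf_of. assert (sup_of (fun r => E (-r)) <= - b); [|lra].
  apply sup_of_least; [exists (- e); rewrite Ropp_involutive; auto|]. intros x hx. specialize (Hb _ hx). lra.
Qed.

Definition lim_of (w : nat -> R) : R := epsilon (inhabits 0) (fun L => Un_cv w L).

Lemma lim_of_spec w : (exists L, Un_cv w L) -> Un_cv w (lim_of w).
Proof. intro H. unfold lim_of. apply epsilon_spec; auto. Qed.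

Lemma Un_cv_const c : Un_cv (fun _ => c) c.
Proof. intros e He; exists O; intros; unfold Rdist; rewrite Rminus_diag, Rabs_R0; lra. Qed.

Lemma Un_cv_ge_const (a : nat -> R) c A : (forall k, c <= a k) -> Un_cv a A -> c <= A.
Proof. intros H Ha. apply (Rle_cv_lim H (Un_cv_const c) Ha). Qed.

Lemma Un_cv_le_const (a : nat -> R) c A : (forall k, a k <= c) -> Un_cv a A -> A <= c.
Proof. intros H Ha. apply (Rle_cv_lim H Ha (Un_cv_const c)). Qed.

Lemma Rle_cv_lim_vanishing (a b c : nat -> R) A B :
  (forall k, a k <= b k + c k) -> Un_cv a A -> Un_cv b B -> Un_cv c 0 -> A <= B.
Proof.
  intros H Ha Hb Hc. rewrite <- (Rplus_0_r B). apply (Rle_cv_lim H Ha). apply CV_plus; auto.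
Qed.

Definition strictly_increasing (s : nat -> nat) := forall k, (s k < s (S k))%nat.

Lemma strictly_increasing_ge s : strictly_increasing s -> forall k, (k <= s k)%nat.
Proof. intros H k; induction k; [lia|]. specialize (H k); lia. Qed.

Lemma strictly_increasing_lt s : strictly_increasing s -> forall m n, (m < n)%nat -> (s m < s n)%nat.
Proof. intros H m n h. induction h; [apply H|]. specialize (H m0); lia. Qed.

Lemma Un_cv_inv_succ_subseq (phi : nat -> nat) :
  (forall k, (k <= phi k)%nat) -> Un_cv (fun k => / INR (S (phi k))) 0.
Proof.
  intros Hphi e He. destruct (eventually_inv_succ_lt e He) as [J HJ]. exists J. intros n Hn. unfold Rdist.
  rewrite Rminus_0_r, Rabs_right by (left; apply inv_succ_pos). apply HJ. specialize (Hphi n); lia.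
Qed.

(* The boundedness hypothesis sits under the existential so that [subseq01] below is total. *)
Lemma subseq01_exists (v : nat -> R) : exists s, strictly_increasing s /\
  ((forall k, 0 <= v k <= 1) -> exists L, Un_cv (fun k => v (s k)) L).
Proof.
  destruct (classic (forall k, 0 <= v k <= 1)) as [Hb|Hb].
  2: { exists (fun k => k). split; [intro; lia| tauto]. }
  destruct (Bolzano_Weierstrass v _ (compact_P3 0 1) Hb) as [l Hl].
  assert (Hn : forall N k, exists p, (N <= p)%nat /\ Rabs (v p - l) < / INR (S k)).
  { intros N k. destruct (Hl (disc l (mkposreal _ (inv_succ_pos k))) N) as [p [h1 h2]].
    - exists (mkposreal _ (inv_succ_pos k)). intros y hy; auto.
    - exists p; split; auto. }
  set (nx := fun N k => proj1_sig (constructive_indefinite_description _ (Hn N k))).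
  assert (Hnx : forall N k, (N <= nx N k)%nat /\ Rabs (v (nx N k) - l) < / INR (S k)).
  { intros; unfold nx; destruct constructive_indefinite_description; auto. }
  set (s := fix s k := match k with O => nx O O | S k' => nx (S (s k')) k end).
  exists s. split.
  - intro k. simpl. destruct (Hnx (S (s k)) (S k)); lia.
  - intros _. exists l. intros e He. destruct (eventually_inv_succ_lt e He) as [J HJ]. exists J. intros n hn.
    unfold Rdist. assert (h : Rabs (v (s n) - l) < / INR (S n)) by (destruct n; simpl; apply Hnx).
    eapply Rlt_trans; [apply h| apply HJ; lia].
Qed.

Definition subseq01 (v : nat -> R) : nat -> nat :=
  proj1_sig (constructive_indefinite_description _ (subseq01_exists v)).

Lemma subseq01_spec v : strictly_increasing (subseq01 v) /\
  ((forall k, 0 <= v k <= 1) -> exists L, Un_cv (fun k => v (subseq01 v k)) L).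
Proof. unfold subseq01; destruct constructive_indefinite_description; auto. Qed.

Lemma diagonal_subseq (u : nat -> nat -> R) : (forall i k, 0 <= u i k <= 1) ->
  exists phi, strictly_increasing phi /\ forall i, exists L, Un_cv (fun k => u i (phi k)) L.
Proof.
  intros Hu.
  set (Phi := fix Phi i := match i with
              | O => subseq01 (u O)
              | S i' => fun t => Phi i' (subseq01 (fun t => u (S i') (Phi i' t)) t) end).
  assert (HPhi : forall i, strictly_increasing (Phi i)).
  { induction i; simpl. apply subseq01_spec. intro k. apply strictly_increasing_lt; auto. apply subseq01_spec. }
  assert (Hcv : forall i, exists L, Un_cv (fun k => u i (Phi i k)) L).
  { destruct i; simpl. apply subseq01_spec; auto.
    apply (proj2 (subseq01_spec (fun t => u (S i) (Phi i t)))); auto. }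
  assert (Hrho : forall i j, exists rho, (forall t, (t <= rho t)%nat) /\
                                       forall t, Phi (i + j)%nat t = Phi i (rho t)).
  { intros i j; induction j.
    - exists (fun t => t); split; intros; try rewrite Nat.add_0_r; auto.
    - destruct IHj as [rho [h1 h2]].
      exists (fun t => rho (subseq01 (fun t => u (S (i + j)) (Phi (i+j)%nat t)) t)).
      split. intro t. eapply Nat.le_trans; [|apply h1]. apply strictly_increasing_ge, subseq01_spec.
      intro t. replace (i + S j)%nat with (S (i + j)) by lia. simpl. apply h2. }
  exists (fun k => Phi k k). split.
  - intro k. simpl. apply strictly_increasing_lt; auto.
    assert (h := strictly_increasing_ge _ (proj1 (subseq01_spec (fun t => u (S k) (Phi k t)))) (S k)). lia.
  - intro i. destruct (Hcv i) as [L HL]. exists L. intros e He. destruct (HL e He) as [N HN].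
    exists (i + N)%nat. intros k hk. destruct (Hrho i (k - i)%nat) as [rho [h1 h2]].
    replace (i + (k - i))%nat with k in h2 by lia. rewrite h2. apply HN. specialize (h1 k). lia.
Qed.

(* the first N terms, i.e. f 0 + ... + f (N - 1), unlike [sum_f_R0 f N] *)
Fixpoint sum_below (f : nat -> R) (N : nat) : R :=
  match N with O => 0 | S n => sum_below f n + f n end.

Lemma sum_below_le f g N : (forall n, f n <= g n) -> sum_below f N <= sum_below g N.
Proof. intro H; induction N; simpl. lra. specialize (H N); lra. Qed.

Lemma sum_below_plus f g N : sum_below (fun n => f n + g n) N = sum_below f N + sum_below g N.
Proof. induction N; simpl. lra. rewrite IHN; lra. Qed.

Lemma sum_below_ext f g N : (forall n, f n = g n) -> sum_below f N = sum_below g N.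
Proof. intro H; induction N; simpl; auto. rewrite IHN, H; auto. Qed.

Lemma sum_below_const c N : sum_below (fun _ => c) N = INR N * c.
Proof. induction N; cbn [sum_below]. simpl; lra. rewrite IHN, S_INR; lra. Qed.

Lemma sum_below_nonneg f N : (forall n, 0 <= f n) -> 0 <= sum_below f N.
Proof. intro H; induction N; simpl; [lra|]. specialize (H N); lra. Qed.

Lemma sum_below_geometric e N : sum_below (fun n => e * / 2 ^ (S n)) N = e * (1 - / 2 ^ N).
Proof.
  induction N; cbn [sum_below]. simpl. field. rewrite IHN. simpl pow.
  assert (2 ^ N <> 0) by (apply pow_nonzero; lra). field; auto.
Qed.

Lemma sum_f_R0_sum_below f N : sum_f_R0 f N = sum_below f (S N).
Proof. induction N; simpl. lra. simpl in IHN. rewrite IHN. auto. Qed.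

Lemma sum_below_tail_ge f N m e : (forall k, 0 <= f k) -> (N <= m)%nat ->
  (forall n, (N <= n)%nat -> (n < m)%nat -> e <= f n) -> e * (INR m - INR N) <= sum_below f m.
Proof.
  intros H hNm Hf. induction m.
  - replace N with O by lia. simpl; lra.
  - destruct (Nat.eq_dec N (S m)) as [->|hne].
    + rewrite Rminus_diag, Rmult_0_r. apply sum_below_nonneg; auto.
    + cbn [sum_below]. assert (h := IHm ltac:(lia) ltac:(intros; apply Hf; lia)).
      assert (h2 := Hf m ltac:(lia) ltac:(lia)). rewrite S_INR. lra.
Qed.

Fixpoint list_code (l : list nat) : nat :=
  match l with nil => O | h :: t => S (Cantor.to_nat (h, list_code t)) end.

Fixpoint list_decode_fuel (fuel n : nat) : list nat :=
  match fuel with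
  | O => nil
  | S f => match n with O => nil | S m => let '(h, t) := Cantor.of_nat m in h :: list_decode_fuel f t end
  end.

Definition list_decode n := list_decode_fuel n n.

Lemma list_decode_fuel_code l f : (list_code l <= f)%nat -> list_decode_fuel f (list_code l) = l.
Proof.
  revert f; induction l as [|h t IH]; intros f hf; cbn [list_code] in *.
  - destruct f; auto.
  - destruct f as [|f]; [lia|]. cbn [list_decode_fuel]. rewrite Cantor.cancel_of_to. f_equal. apply IH.
    assert (h1 := Cantor.to_nat_non_decreasing h (list_code t)). lia.
Qed.

Lemma list_decode_code l : list_decode (list_code l) = l.
Proof. apply list_decode_fuel_code; auto. Qed.

Section BasicBalls.
Context {X : Type}.
Variable d : X -> X -> R.
Hypotheses (Hd : is_metric d) (Hcpt : compact_space d).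
Variable x0 : X.

Definition net (k : nat) : list X :=
  proj1_sig (constructive_indefinite_description _ (finite_net d Hd Hcpt _ (inv_succ_pos k))).

Lemma net_spec k x : exists c, In c (net k) /\ d x c < / INR (S k).
Proof. unfold net; destruct constructive_indefinite_description; simpl; auto. Qed.

(* index n codes ((k, j), r): the ball of radius 1/(r+1) about the j-th point of the k-th net *)
Definition ball_center (n : nat) : X :=
  let '(a, r) := Cantor.of_nat n in let '(k, j) := Cantor.of_nat a in nth j (net k) x0.
Definition ball_radius (n : nat) : R := let '(a, r) := Cantor.of_nat n in / INR (S r).

Definition basic_ball i x := d x (ball_center i) < ball_radius i.
Definition basic_cball i x := d x (ball_center i) <= ball_radius i.
Definition ball_union (l : list nat) (x : X) := exists i, In i l /\ basic_ball i x.
Definition cball_union (l : list nat) (x : X) := exists i, In i l /\ basic_cball i x.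

Lemma ball_union_cball l x : ball_union l x -> cball_union l x.
Proof. intros [i [h1 h2]]; exists i; split; auto; unfold basic_cball, basic_ball in *; lra. Qed.

Lemma closed_cball_union l : closed_set d (cball_union l).
Proof.
  induction l as [|i l IH].
  - eapply closed_ext; [|apply closed_empty; auto]. intro x; split; [tauto|intros [i [[] _]]].
  - eapply closed_ext; [|apply (closed_union d _ _ (closed_cball d Hd (ball_center i) (ball_radius i)) IH)].
    intro x; split.
    + intros [h|[j [h1 h2]]]; [exists i|exists j]; split; simpl; auto.
    + intros [j [[h1|h1] h2]]; subst; [left|right]; auto. exists j; auto.
Qed.

Lemma ball_union_app l1 l2 x : ball_union (l1 ++ l2) x <-> ball_union l1 x \/ ball_union l2 x.
Proof.
  split.
  - intros [i [h1 h2]]. apply in_app_or in h1. destruct h1; [left|right]; exists i; auto.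
  - intros [[i [h1 h2]]|[i [h1 h2]]]; exists i; split; auto; apply in_or_app; auto.
Qed.

Lemma cball_union_app l1 l2 x : cball_union (l1 ++ l2) x <-> cball_union l1 x \/ cball_union l2 x.
Proof.
  split.
  - intros [i [h1 h2]]. apply in_app_or in h1. destruct h1; [left|right]; exists i; auto.
  - intros [[i [h1 h2]]|[i [h1 h2]]]; exists i; split; auto; apply in_or_app; auto.
Qed.

Lemma basic_ball_inside x G : open_set d G -> G x ->
  exists i, basic_ball i x /\ forall y, basic_cball i y -> G y.
Proof.
  intros HG Gx. destruct (HG x Gx) as [s [Hs H]].
  destruct (eventually_inv_succ_lt (s / 2) ltac:(lra)) as [J HJ]. specialize (HJ J ltac:(lia)).
  destruct (net_spec J x) as [c [hc1 hc2]]. destruct (In_nth _ _ x0 hc1) as [j [_ hj]].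
  set (i := Cantor.to_nat (Cantor.to_nat (J, j), J)).
  assert (Hc : ball_center i = c) by (unfold ball_center, i; rewrite !Cantor.cancel_of_to; auto).
  assert (Hr : ball_radius i = / INR (S J)) by (unfold ball_radius, i; rewrite !Cantor.cancel_of_to; auto).
  exists i. unfold basic_ball, basic_cball. rewrite Hc, Hr. split; auto. intros y hy. apply H.
  assert (h := dist_triangle d Hd x c y). rewrite (dist_sym d Hd c y) in h. lra.
Qed.

Lemma finite_basic_refinement (K : X -> Prop) (g : X -> X) (Gs : nat -> X -> Prop) :
  closed_set d K -> continuous_map d g -> (forall n, open_set d (Gs n)) ->
  (forall x, K x -> exists n, Gs n (g x)) ->
  exists L : list (nat * nat), (forall x, K x -> exists p, In p L /\ basic_ball (fst p) (g x)) /\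
    (forall p, In p L -> forall y, basic_cball (fst p) y -> Gs (snd p) y).
Proof.
  intros HK Hg HG Hc.
  set (good := fun p : nat * nat => forall y, basic_cball (fst p) y -> Gs (snd p) y).
  destruct (compact_closed_cover d Hcpt K (fun p x => good p /\ basic_ball (fst p) (g x)) HK) as [L0 HL0].
  - intros p. destruct (classic (good p)) as [h|h].
    + eapply open_ext; [|apply (open_preimage d g _ Hg (open_ball d Hd (ball_center (fst p)) (ball_radius (fst p))))].
      intro x; unfold basic_ball; tauto.
    + eapply open_ext; [|apply open_empty]. intro x; simpl; tauto.
  - intros x Kx. destruct (Hc x Kx) as [n Hn].
    destruct (basic_ball_inside (g x) (Gs n) (HG n) Hn) as [i [h1 h2]]. exists (i, n); split; auto.
  - set (b := fun p => if excluded_middle_informative (good p) then true else false).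
    exists (filter b L0). split.
    + intros x Kx. destruct (HL0 x Kx) as [p [h1 [h2 h3]]]. exists p; split; auto.
      apply filter_In; split; auto. unfold b; destruct excluded_middle_informative; tauto.
    + intros p hp. apply filter_In in hp. destruct hp as [_ hp]. unfold b in hp.
      destruct excluded_middle_informative; auto; discriminate.
Qed.

Lemma finite_basic_cover (K : X -> Prop) (g : X -> X) (G : X -> Prop) :
  closed_set d K -> continuous_map d g -> open_set d G -> (forall x, K x -> G (g x)) ->
  exists l, (forall x, K x -> ball_union l (g x)) /\ (forall y, cball_union l y -> G y).
Proof.
  intros HK Hg HG Hc.
  destruct (finite_basic_refinement K g (fun _ => G) HK Hg (fun _ => HG) ltac:(intros x h; exists O; auto))
    as [L [H1 H2]].
  exists (map fst L). split.
  - intros x Kx. destruct (H1 x Kx) as [p [h1 h2]]. exists (fst p); split; auto. apply in_map; auto.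
  - intros y [i [hi hy]]. apply in_map_iff in hi. destruct hi as [p [<- hp]]. apply (H2 p hp y hy).
Qed.

End BasicBalls.

(** * From a content on finite unions of basic balls to a Borel probability measure *)

(* Without a Riesz representation theorem the invariant measure is built by hand: a finitely
   additive [m] on finite unions of basic balls gives an inner content on open sets, and the
   outer measure it generates restricts to a measure on the Caratheodory-measurable sets, which
   include the Borel sets. *)
Section ContentMeasure.
Context {X : Type}.
Variable d : X -> X -> R.
Hypotheses (Hd : is_metric d) (Hcpt : compact_space d).
Variable x0 : X.
Local Notation U := (ball_union d Hd Hcpt x0).
Local Notation CU := (cball_union d Hd Hcpt x0).

Variable m : list nat -> R.
Hypothesis m_bounded : forall l, 0 <= m l <= 1.
Hypothesis m_nil : m nil = 0.
Hypothesis m_full : forall l, (forall x, U l x) -> m l = 1.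
Hypothesis m_mono : forall l1 l2, (forall x, U l1 x -> U l2 x) -> m l1 <= m l2.
Hypothesis m_app : forall l1 l2, m (l1 ++ l2) <= m l1 + m l2.
Hypothesis m_app_disjoint : forall l1 l2,
  (forall x, U l1 x -> U l2 x -> False) -> m (l1 ++ l2) = m l1 + m l2.

Lemma m_ext l1 l2 : (forall x, U l1 x <-> U l2 x) -> m l1 = m l2.
Proof. intro H; apply Rle_antisym; apply m_mono; intros x; apply H. Qed.

Definition content (G : X -> Prop) : R := sup_of (fun r => exists l, (forall y, CU l y -> G y) /\ r = m l).

Definition outer (A : X -> Prop) : R :=
  inf_of (fun r => exists G, open_set d G /\ (forall x, A x -> G x) /\ r = content G).

Lemma content_ub G l : (forall y, CU l y -> G y) -> m l <= content G.
Proof. intro H. apply (sup_of_ub _ 1). intros r [l' [_ ->]]; apply m_bounded. exists l; auto. Qed.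

Lemma content_least G b : (forall l, (forall y, CU l y -> G y) -> m l <= b) -> content G <= b.
Proof.
  intro H. apply sup_of_least.
  - exists (m nil), nil. split; auto. intros y [i [[] _]].
  - intros r [l [h ->]]. auto.
Qed.

Lemma content_bounded G : 0 <= content G <= 1.
Proof.
  split.
  - rewrite <- m_nil. apply content_ub. intros y [i [[] _]].
  - apply content_least. intros; apply m_bounded.
Qed.

Lemma content_mono G1 G2 : (forall x, G1 x -> G2 x) -> content G1 <= content G2.
Proof. intro H. apply content_least. intros l hl. apply content_ub. auto. Qed.

Lemma content_empty : content (fun _ => False) = 0.
Proof.
  apply Rle_antisym; [|apply content_bounded]. apply content_least. intros l hl.
  rewrite <- m_nil. apply m_mono. intros x hx. apply ball_union_cball in hx. apply hl in hx. contradiction.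
Qed.

Lemma outer_le_content A G : open_set d G -> (forall x, A x -> G x) -> outer A <= content G.
Proof.
  intros HG H. apply (inf_of_lb _ 0); [intros r [G' [_ [_ ->]]]; apply content_bounded|]. exists G; auto.
Qed.

Lemma outer_greatest A b : (forall G, open_set d G -> (forall x, A x -> G x) -> b <= content G) -> b <= outer A.
Proof.
  intro H. apply inf_of_greatest.
  - exists (content (fun _ => True)), (fun _ => True). split; auto. apply open_full.
  - intros r [G [h1 [h2 ->]]]; auto.
Qed.

Lemma outer_bounded A : 0 <= outer A <= 1.
Proof.
  split.
  - apply outer_greatest; intros; apply content_bounded.
  - eapply Rle_trans; [apply (outer_le_content A (fun _ => True)); auto; apply open_full|apply content_bounded].
Qed.

Lemma outer_mono A B : (forall x, A x -> B x) -> outer A <= outer B.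
Proof. intro H. apply outer_greatest. intros G HG HB. apply outer_le_content; auto. Qed.

Lemma outer_ext A B : (forall x, A x <-> B x) -> outer A = outer B.
Proof. intro H. rewrite (pred_ext A B H); auto. Qed.

Lemma outer_open G : open_set d G -> outer G = content G.
Proof.
  intro HG. apply Rle_antisym; [apply outer_le_content; auto|].
  apply outer_greatest. intros; apply content_mono; auto.
Qed.

Lemma outer_empty : outer (fun _ => False) = 0.
Proof. rewrite outer_open by apply open_empty. apply content_empty. Qed.

Lemma outer_full : outer (fun _ => True) = 1.
Proof.
  rewrite outer_open by apply open_full. apply Rle_antisym; [apply content_bounded|].
  destruct (finite_basic_cover d Hd Hcpt x0 (fun _ => True) (fun x => x) (fun _ => True)) as [l [h1 h2]]; auto.
  - apply (closed_ext d (fun x => ~ False)); [tauto|]. apply closed_compl_open, open_empty.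
  - apply continuous_id.
  - apply open_full.
  - rewrite <- (m_full l) by auto. apply content_ub; auto.
Qed.

Lemma m_le_content_sum (Gs : nat -> X -> Prop) (L : list (nat * nat)) :
  (forall p, In p L -> forall y, basic_cball d Hd Hcpt x0 (fst p) y -> Gs (snd p) y) ->
  forall N, m (map fst (filter (fun p => Nat.ltb (snd p) N) L)) <= sum_below (fun n => content (Gs n)) N.
Proof.
  intros HL N. induction N as [|N IH]; simpl sum_below.
  - replace (filter _ L) with (@nil (nat * nat)) by (clear; induction L; auto). simpl; lra.
  - set (now := map fst (filter (fun p => Nat.eqb (snd p) N) L)).
    assert (E : forall x, U (map fst (filter (fun p => Nat.ltb (snd p) (S N)) L)) x <->
                          U (map fst (filter (fun p => Nat.ltb (snd p) N) L) ++ now) x).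
    { intro x. rewrite ball_union_app. unfold ball_union, now.
      setoid_rewrite in_map_iff. setoid_rewrite filter_In.
      setoid_rewrite Nat.ltb_lt. setoid_rewrite Nat.eqb_eq. split.
      - intros [i [[p [<- [hp hlt]]] hb]]. destruct (Nat.eq_dec (snd p) N) as [e|e].
        + right. exists (fst p); split; eauto.
        + left. exists (fst p); split; auto. exists p; split; auto; split; auto; lia.
      - intros [[i [[p [<- [hp hlt]]] hb]]|[i [[p [<- [hp hlt]]] hb]]]; exists (fst p); split; auto;
          exists p; repeat split; auto; lia. }
    rewrite (m_ext _ _ E). eapply Rle_trans; [apply m_app|]. apply Rplus_le_compat; auto.
    apply content_ub. intros y [i [hi hy]]. unfold now in hi. apply in_map_iff in hi.
    destruct hi as [p [<- hp]]. apply filter_In in hp. destruct hp as [hp he].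
    apply Nat.eqb_eq in he. rewrite <- he. apply (HL p hp y hy).
Qed.

Lemma m_le_content_cover (Gs : nat -> X -> Prop) l :
  (forall n, open_set d (Gs n)) -> (forall y, CU l y -> exists n, Gs n y) ->
  exists N, m l <= sum_below (fun n => content (Gs n)) N.
Proof.
  intros HG Hc.
  destruct (finite_basic_refinement d Hd Hcpt x0 (CU l) (fun x => x) Gs (closed_cball_union d Hd Hcpt x0 l)
             (continuous_id d) HG Hc) as [L [H1 H2]].
  set (N := S (fold_right (fun p n => Nat.max (snd p) n) 0%nat L)).
  assert (HN : forall p, In p L -> (snd p < N)%nat).
  { intros p hp. unfold N. clear -hp. induction L as [|q L IH]; simpl in *; [tauto|].
    destruct hp as [<-|hp]; [lia|]. specialize (IH hp). lia. }
  exists N. eapply Rle_trans; [|apply (m_le_content_sum Gs L H2)]. apply m_mono. intros x hx.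
  apply ball_union_cball in hx. destruct (H1 x hx) as [p [hp hb]]. exists (fst p). split; auto.
  apply in_map. apply filter_In; split; auto. apply Nat.ltb_lt; auto.
Qed.

Lemma outer_approx A e : 0 < e -> exists G, open_set d G /\ (forall x, A x -> G x) /\ content G < outer A + e.
Proof.
  intro He. apply NNPP; intro H. assert (outer A + e <= outer A); [|lra].
  apply outer_greatest. intros G HG HA. apply Rnot_lt_le. intro h. apply H; exists G; auto.
Qed.

(* approximate each A n from outside within e / 2^(n+2) *)
Lemma outer_countable_subadditive (A : nat -> X -> Prop) b :
  (forall N, sum_below (fun n => outer (A n)) N <= b) -> outer (fun x => exists n, A n x) <= b.
Proof.
  intro HS. apply Rnot_lt_le; intro hlt. set (e := outer (fun x => exists n, A n x) - b).
  assert (He : 0 < e) by (unfold e; lra).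
  assert (Hn : forall n, exists G, open_set d G /\ (forall x, A n x -> G x) /\
                                  content G < outer (A n) + e / 2 * / 2 ^ (S n)).
  { intro n. apply outer_approx. apply Rmult_lt_0_compat. lra. apply Rinv_0_lt_compat, pow_lt; lra. }
  set (Gs := fun n => proj1_sig (constructive_indefinite_description _ (Hn n))).
  assert (HGs : forall n, open_set d (Gs n) /\ (forall x, A n x -> Gs n x) /\
                         content (Gs n) < outer (A n) + e / 2 * / 2 ^ (S n)).
  { intro n; unfold Gs; destruct constructive_indefinite_description; auto. }
  assert (H1 : content (fun x => exists n, Gs n x) <= b + e / 2).
  { apply content_least. intros l hl. destruct (m_le_content_cover Gs l (fun n => proj1 (HGs n)) hl) as [N HN].
    eapply Rle_trans; [apply HN|].
    eapply Rle_trans; [apply (sum_below_le _ (fun n => outer (A n) + e / 2 * / 2 ^ (S n)));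
                       intro n; left; apply HGs|].
    rewrite sum_below_plus, sum_below_geometric. specialize (HS N).
    assert (0 < / 2 ^ N) by (apply Rinv_0_lt_compat, pow_lt; lra).
    assert (0 < e / 2 * / 2 ^ N) by (apply Rmult_lt_0_compat; lra). lra. }
  assert (H2 : outer (fun x => exists n, A n x) <= content (fun x => exists n, Gs n x)).
  { apply outer_le_content. apply open_union; intro n; apply HGs. intros x [n hx]. exists n; apply HGs; auto. }
  unfold e in *. lra.
Qed.

Lemma outer_union A B : outer (fun x => A x \/ B x) <= outer A + outer B.
Proof.
  set (F := fun n : nat => match n with O => A | 1%nat => B | _ => fun _ => False end).
  assert (h1 := outer_bounded A); assert (h2 := outer_bounded B).
  rewrite (outer_ext _ (fun x => exists n, F n x)).
  - apply outer_countable_subadditive. intro N. destruct N as [|[|N]]; [simpl; lra|simpl; lra|].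
    assert (E : forall k, sum_below (fun n => outer (F n)) (S (S k)) = outer A + outer B).
    { induction k; [simpl; lra|]. cbn [sum_below] in *. rewrite IHk. simpl F. rewrite outer_empty. lra. }
    rewrite E. lra.
  - intro x; split; [intros [h|h]; [exists O|exists 1%nat]; auto|intros [[|[|n]] h]; simpl in h; tauto].
Qed.

Definition measurable (A : X -> Prop) :=
  forall E, outer (fun x => E x /\ A x) + outer (fun x => E x /\ ~ A x) <= outer E.

Lemma measurable_split A E : measurable A ->
  outer (fun x => E x /\ A x) + outer (fun x => E x /\ ~ A x) = outer E.
Proof.
  intro H. apply Rle_antisym; auto. rewrite (outer_ext E (fun x => (E x /\ A x) \/ (E x /\ ~ A x))) at 1.
  - apply outer_union.
  - intro x; split; [intro h; destruct (classic (A x)); auto|tauto].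
Qed.

(* removing a closed union of balls inside H ∩ G leaves an open subset of H of smaller content *)
Lemma content_split H G : open_set d H -> open_set d G ->
  content (fun x => H x /\ G x) + outer (fun x => H x /\ ~ G x) <= content H.
Proof.
  intros HH HG.
  assert (K : forall l1, (forall y, CU l1 y -> H y /\ G y) -> m l1 + outer (fun x => H x /\ ~ G x) <= content H).
  { intros l1 hl1. set (H' := fun x => H x /\ ~ CU l1 x).
    assert (HH' : open_set d H') by (apply open_inter; auto; apply (closed_cball_union d Hd Hcpt x0 l1)).
    assert (h1 : outer (fun x => H x /\ ~ G x) <= content H').
    { apply outer_le_content; auto. intros x [h h']; split; auto. intro hc; apply h'; apply hl1; auto. }
    assert (h2 : content H' <= content H - m l1).
    { apply content_least. intros l2 hl2.
      assert (D : forall x, U l1 x -> U l2 x -> False).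
      { intros x h h'. apply ball_union_cball in h. apply ball_union_cball in h'. apply hl2 in h'.
        destruct h'; auto. }
      assert (E := m_app_disjoint l1 l2 D). assert (content H >= m (l1 ++ l2)); [|lra].
      apply Rle_ge, content_ub. intros y hy. apply cball_union_app in hy.
      destruct hy as [hy|hy]; [apply hl1|apply hl2]; auto. }
    lra. }
  assert (content (fun x => H x /\ G x) <= content H - outer (fun x => H x /\ ~ G x)); [|lra].
  apply content_least. intros l hl. specialize (K l hl). lra.
Qed.

Lemma measurable_open G : open_set d G -> measurable G.
Proof.
  intros HG E. apply outer_greatest. intros H HH HE.
  assert (h1 : outer (fun x => E x /\ G x) <= content (fun x => H x /\ G x)).
  { apply outer_le_content. apply open_inter; auto. intros x [h h']; auto. }
  assert (h2 : outer (fun x => E x /\ ~ G x) <= outer (fun x => H x /\ ~ G x)).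
  { apply outer_mono. intros x [h h']; auto. }
  assert (h3 := content_split H G HH HG). lra.
Qed.

Lemma measurable_compl A : measurable A -> measurable (fun x => ~ A x).
Proof.
  intros HA E. rewrite (outer_ext (fun x => E x /\ ~ ~ A x) (fun x => E x /\ A x)).
  - specialize (HA E). lra.
  - intro x; split; [intros [h h']; split; auto; apply NNPP; auto|tauto].
Qed.

Lemma measurable_union A B : measurable A -> measurable B -> measurable (fun x => A x \/ B x).
Proof.
  intros HA HB E.
  assert (h1 : outer (fun x => E x /\ (A x \/ B x))
               <= outer (fun x => E x /\ A x) + outer (fun x => (E x /\ ~ A x) /\ B x)).
  { rewrite (outer_ext (fun x => E x /\ (A x \/ B x)) (fun x => (E x /\ A x) \/ ((E x /\ ~ A x) /\ B x))).
    - apply outer_union.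
    - intro x; split; [intros [h [h'|h']]; [left|destruct (classic (A x))]; auto|tauto]. }
  assert (h2 : outer (fun x => E x /\ ~ (A x \/ B x)) = outer (fun x => (E x /\ ~ A x) /\ ~ B x))
    by (apply outer_ext; intro x; tauto).
  specialize (HA E). specialize (HB (fun x => E x /\ ~ A x)). lra.
Qed.

Lemma measurable_add E A B : measurable A -> (forall x, A x -> B x -> False) ->
  outer (fun x => E x /\ (A x \/ B x)) = outer (fun x => E x /\ A x) + outer (fun x => E x /\ B x).
Proof.
  intros HA D. rewrite <- (measurable_split A (fun x => E x /\ (A x \/ B x)) HA).
  f_equal; apply outer_ext; intro x; split; try tauto.
  intros [h h']; split; [tauto|]. intro ha; eapply D; eauto.
Qed.

Definition union_below (A : nat -> X -> Prop) N x := exists n, (n < N)%nat /\ A n x.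

Lemma union_below_S (A : nat -> X -> Prop) N x : union_below A (S N) x <-> union_below A N x \/ A N x.
Proof.
  split.
  - intros [n [hn h]]. destruct (Nat.eq_dec n N); [subst; auto|]. left; exists n; split; auto; lia.
  - intros [[n [hn h]]|h]; [exists n|exists N]; split; auto; lia.
Qed.

Lemma measurable_union_below (A : nat -> X -> Prop) N :
  (forall n, measurable (A n)) -> measurable (union_below A N).
Proof.
  intro HA. induction N.
  - intro E. rewrite (outer_ext (fun x => E x /\ union_below A 0 x) (fun _ => False)), outer_empty.
    + rewrite (outer_ext (fun x => E x /\ ~ union_below A 0 x) E); [lra|].
      intro x; split; [tauto|]. intro; split; auto. intros [n [hn _]]; lia.
    + intro x; split; [intros [_ [n [hn _]]]; lia|tauto].
  - rewrite (pred_ext _ _ (union_below_S A N)). apply measurable_union; auto.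
Qed.

Lemma outer_union_below (A : nat -> X -> Prop) E N :
  (forall n, measurable (A n)) -> (forall m n, m <> n -> forall x, A m x -> A n x -> False) ->
  outer (fun x => E x /\ union_below A N x) = sum_below (fun n => outer (fun x => E x /\ A n x)) N.
Proof.
  intros HA D. induction N; cbn [sum_below].
  - rewrite <- outer_empty. apply outer_ext. intro x; split; [intros [_ [n [hn _]]]; lia|tauto].
  - rewrite <- IHN. rewrite (outer_ext _ (fun x => E x /\ (union_below A N x \/ A N x))).
    + apply measurable_add. apply measurable_union_below; auto.
      intros x [n [hn h]] h'. apply (D n N ltac:(lia) x); auto.
    + intro x. rewrite union_below_S. tauto.
Qed.

Lemma measurable_disjoint_union (A : nat -> X -> Prop) :
  (forall n, measurable (A n)) -> (forall m n, m <> n -> forall x, A m x -> A n x -> False) ->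
  measurable (fun x => exists n, A n x).
Proof.
  intros HA D E.
  assert (H : forall N, sum_below (fun n => outer (fun x => E x /\ A n x)) N
                        <= outer E - outer (fun x => E x /\ ~ exists n, A n x)).
  { intro N. rewrite <- outer_union_below by auto. assert (h := measurable_union_below A N HA E).
    assert (outer (fun x => E x /\ ~ (exists n, A n x)) <= outer (fun x => E x /\ ~ union_below A N x)).
    { apply outer_mono. intros x [h1 h2]. split; auto. intros [n [_ h3]]. apply h2; eauto. }
    lra. }
  assert (h := outer_countable_subadditive (fun n x => E x /\ A n x) _ H).
  rewrite (outer_ext (fun x => E x /\ exists n, A n x) (fun x => exists n, E x /\ A n x)); [lra|].
  intro x; split; [intros [h1 [n h2]]; eauto| intros [n [h1 h2]]; eauto].
Qed.

Lemma measurable_countable_union (A : nat -> X -> Prop) :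
  (forall n, measurable (A n)) -> measurable (fun x => exists n, A n x).
Proof.
  intros HA. set (D := fun n x => A n x /\ ~ union_below A n x).
  assert (HD : forall n, measurable (D n)).
  { intro n. unfold D.
    rewrite (pred_ext (fun x => A n x /\ ~ union_below A n x) (fun x => ~ (~ A n x \/ union_below A n x))).
    - apply measurable_compl, measurable_union; [apply measurable_compl; auto|apply measurable_union_below; auto].
    - intro x; split; [tauto|intro h; split; [apply NNPP|]; tauto]. }
  rewrite (pred_ext (fun x => exists n, A n x) (fun x => exists n, D n x)).
  - apply measurable_disjoint_union; auto. intros p q hpq x [h1 h2] [h3 h4].
    destruct (Nat.lt_total p q) as [h|[h|h]]; try lia.
    + apply h4; exists p; auto.
    + apply h2; exists q; auto.
  - intro x; split; [|intros [n [h _]]; eauto]. intros [n hn]. induction n as [n IH] using lt_wf_ind.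
    destruct (classic (union_below A n x)) as [[k [hk h]]|h]; [apply (IH k hk h)|]. exists n; split; auto.
Qed.

Lemma measurable_borel A : borel d A -> measurable A.
Proof.
  intro HA. apply HA.
  - split; [|split].
    + intro E. rewrite (outer_ext (fun x => E x /\ True) E), (outer_ext (fun x => E x /\ ~ True) (fun _ => False)),
        outer_empty; [lra|intro; tauto|intro; tauto].
    + apply measurable_compl.
    + apply measurable_countable_union.
  - apply measurable_open.
Qed.

Lemma outer_compl A : borel d A -> outer (fun x => ~ A x) = 1 - outer A.
Proof.
  intro HA. rewrite <- outer_full, <- (measurable_split A (fun _ => True) (measurable_borel A HA)).
  rewrite (outer_ext (fun x => True /\ A x) A), (outer_ext (fun x => True /\ ~ A x) (fun x => ~ A x));
    try (intro; tauto). lra.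
Qed.

Lemma outer_sigma (A : nat -> X -> Prop) :
  (forall n, borel d (A n)) -> (forall m n, m <> n -> forall x, A m x -> A n x -> False) ->
  infinite_sum (fun n => outer (A n)) (outer (fun x => exists n, A n x)).
Proof.
  intros HA D.
  assert (HS : forall N, sum_below (fun n => outer (A n)) N = outer (union_below A N)).
  { intro N. rewrite <- (outer_ext (fun x => True /\ union_below A N x)) by tauto.
    rewrite outer_union_below; auto; [|intro; apply measurable_borel; auto].
    apply sum_below_ext. intro n. apply outer_ext; tauto. }
  assert (Hle : forall N, outer (union_below A N) <= outer (fun x => exists n, A n x)).
  { intro N. apply outer_mono. intros x [n [_ h]]; eauto. }
  assert (Hinc : forall M N, (M <= N)%nat -> outer (union_below A M) <= outer (union_below A N)).
  { intros M N h. apply outer_mono. intros x [n [hn h']]. exists n; split; auto; lia. }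
  intros e He.
  destruct (classic (exists N, outer (fun x => exists n, A n x) - e < outer (union_below A N))) as [[N HN]|Hn].
  - exists N. intros n hn. unfold Rdist. rewrite sum_f_R0_sum_below, HS.
    assert (h1 := Hle (S n)). assert (h2 := Hinc N (S n) ltac:(lia)). apply Rabs_def1; lra.
  - exfalso. assert (outer (fun x => exists n, A n x) <= outer (fun x => exists n, A n x) - e); [|lra].
    apply outer_countable_subadditive. intro N. rewrite HS. apply Rnot_lt_le. intro h; apply Hn; eauto.
Qed.

Definition content_measure : prob_measure d.
Proof.
  refine {| pm := outer |}.
  - intros; apply outer_bounded.
  - apply outer_full.
  - apply outer_sigma.
Defined.

Lemma content_measure_ge (F : X -> Prop) c : closed_set d F ->
  (forall l, (forall x, F x -> U l x) -> c <= m l) -> c <= content_measure F.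
Proof.
  intros HF Hc. simpl. apply outer_greatest. intros G HG HFG.
  destruct (finite_basic_cover d Hd Hcpt x0 F (fun x => x) G HF (continuous_id d) HG HFG) as [l [h1 h2]].
  eapply Rle_trans; [apply Hc, h1|]. apply content_ub, h2.
Qed.

Section Invariance.
Variable T : X -> X.
Hypothesis HT : continuous_map d T.
Hypothesis m_shift_pre : forall l1 l2, (forall x, U l1 (T x) -> U l2 x) -> m l1 <= m l2.
Hypothesis m_shift_post : forall l1 l2, (forall x, U l1 x -> U l2 (T x)) -> m l1 <= m l2.

Lemma content_preimage G : open_set d G -> content (fun x => G (T x)) = content G.
Proof.
  intro HG. apply Rle_antisym.
  - apply content_least. intros l' hl'.
    destruct (finite_basic_cover d Hd Hcpt x0 (CU l') T G (closed_cball_union d Hd Hcpt x0 l') HT HG hl')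
      as [l [h1 h2]].
    eapply Rle_trans; [|apply (content_ub _ l h2)]. apply m_shift_post. intros x hx. apply h1, ball_union_cball; auto.
  - apply content_least. intros l hl.
    destruct (finite_basic_cover d Hd Hcpt x0 (fun x => CU l (T x)) (fun x => x) (fun x => G (T x)))
      as [l' [h1 h2]].
    + apply closed_preimage; auto. apply closed_cball_union.
    + apply continuous_id.
    + apply open_preimage; auto.
    + intros x hx; apply hl; auto.
    + eapply Rle_trans; [|apply (content_ub _ l' h2)]. apply m_shift_pre. intros x hx.
      apply h1, ball_union_cball; auto.
Qed.

Lemma outer_preimage_le A : outer (fun x => A (T x)) <= outer A.
Proof.
  apply outer_greatest. intros G HG HA. rewrite <- content_preimage by auto.
  apply outer_le_content; [apply open_preimage; auto|]. intros x hx; apply HA; auto.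
Qed.

Lemma content_measure_invariant : invariant T content_measure.
Proof.
  intros A HA. simpl. apply Rle_antisym; [apply outer_preimage_le|].
  assert (HAT : borel d (fun x => A (T x))) by (apply borel_preimage; auto).
  assert (h1 := outer_compl _ HAT). assert (h2 := outer_compl _ HA).
  assert (h3 := outer_preimage_le (fun x => ~ A x)). simpl in h3. lra.
Qed.

End Invariance.

End ContentMeasure.

(** * Krylov-Bogolyubov *)

Section Frequencies.
Context {X : Type}.
Variable d : X -> X -> R.
Hypotheses (Hd : is_metric d) (Hcpt : compact_space d).
Variable T : X -> X.
Variable z : X.
Local Notation U := (ball_union d Hd Hcpt z).

Definition visits (P : X -> Prop) N := count_in (fun n => P (iter T n z)) 0 N.
Definition freq (P : X -> Prop) N := INR (visits P (S N)) / INR (S N).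

Lemma freq_bounded P N : 0 <= freq P N <= 1.
Proof.
  unfold freq. assert (h := count_in_le (fun n => P (iter T n z)) 0 (S N)). fold (visits P (S N)) in h.
  apply le_INR in h. assert (0 < INR (S N)) by (apply lt_0_INR; lia).
  split; [unfold Rdiv; apply Rmult_le_pos; [apply pos_INR|left; apply Rinv_0_lt_compat; lra]|].
  apply (Rmult_le_reg_r (INR (S N))); auto. unfold Rdiv. rewrite Rmult_assoc, Rinv_l; lra.
Qed.

Lemma freq_le_visits P Q e : (forall N, (visits P N <= visits Q N + e)%nat) ->
  forall N, freq P N <= freq Q N + INR e * / INR (S N).
Proof.
  intros H N. unfold freq. specialize (H (S N)). apply le_INR in H. rewrite plus_INR in H.
  assert (0 < INR (S N)) by (apply lt_0_INR; lia). unfold Rdiv.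
  apply (Rmult_le_reg_r (INR (S N))); auto. rewrite Rmult_plus_distr_r, !Rmult_assoc, Rinv_l; lra.
Qed.

Lemma visits_preimage (P : X -> Prop) N :
  (visits P N <= visits (fun x => P (T x)) N + 1)%nat /\ (visits (fun x => P (T x)) N <= visits P N + 1)%nat.
Proof.
  unfold visits. replace (count_in (fun n => P (T (iter T n z))) 0 N) with (count_in (fun n => P (iter T n z)) 1 N).
  - apply count_in_start1.
  - rewrite (count_in_shift _ 1). reflexivity.
Qed.

Lemma freq_union P Q N : freq (fun x => P x \/ Q x) N <= freq P N + freq Q N.
Proof.
  unfold freq, visits. assert (h := count_in_or (fun n => P (iter T n z)) (fun n => Q (iter T n z)) 0 (S N)).
  apply le_INR in h. rewrite plus_INR in h. unfold Rdiv. rewrite <- Rmult_plus_distr_r.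
  apply Rmult_le_compat_r; auto. left; apply inv_succ_pos.
Qed.

Lemma freq_union_disjoint P Q N : (forall x, P x -> Q x -> False) ->
  freq (fun x => P x \/ Q x) N = freq P N + freq Q N.
Proof.
  intro D. unfold freq, visits. rewrite (count_in_or_disjoint (fun n => P (iter T n z)) (fun n => Q (iter T n z))).
  - rewrite plus_INR. unfold Rdiv. ring.
  - intros n; apply D.
Qed.

Definition freq_subseq : nat -> nat :=
  proj1_sig (constructive_indefinite_description _
    (diagonal_subseq (fun i k => freq (U (list_decode i)) k) (fun i k => freq_bounded _ k))).

Lemma freq_subseq_spec : strictly_increasing freq_subseq /\
  forall i, exists L, Un_cv (fun k => freq (U (list_decode i)) (freq_subseq k)) L.
Proof. unfold freq_subseq; destruct constructive_indefinite_description; auto. Qed.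

Definition lim_freq l := lim_of (fun k => freq (U l) (freq_subseq k)).

Lemma lim_freq_cv l : Un_cv (fun k => freq (U l) (freq_subseq k)) (lim_freq l).
Proof.
  unfold lim_freq. apply lim_of_spec. destruct (proj2 freq_subseq_spec (list_code l)) as [L HL].
  exists L. rewrite list_decode_code in HL. auto.
Qed.

Lemma lim_freq_bounded l : 0 <= lim_freq l <= 1.
Proof.
  split; [apply (Un_cv_ge_const _ _ _ (fun k => proj1 (freq_bounded _ _)) (lim_freq_cv l))|
          apply (Un_cv_le_const _ _ _ (fun k => proj2 (freq_bounded _ _)) (lim_freq_cv l))].
Qed.

Lemma lim_freq_le_visits l1 l2 e : (forall N, (visits (U l1) N <= visits (U l2) N + e)%nat) ->
  lim_freq l1 <= lim_freq l2.
Proof.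
  intros H.
  apply (Rle_cv_lim_vanishing _ _ (fun k => INR e * / INR (S (freq_subseq k))) _ _
           (fun k => freq_le_visits _ _ e H (freq_subseq k)) (lim_freq_cv l1) (lim_freq_cv l2)).
  replace 0 with (INR e * 0) by ring. apply CV_mult; [apply Un_cv_const|].
  apply Un_cv_inv_succ_subseq, strictly_increasing_ge, freq_subseq_spec.
Qed.

Lemma lim_freq_mono l1 l2 : (forall x, U l1 x -> U l2 x) -> lim_freq l1 <= lim_freq l2.
Proof.
  intros H. apply (lim_freq_le_visits l1 l2 0). intro N. rewrite Nat.add_0_r.
  apply count_in_mono. intros k _; apply H.
Qed.

Lemma lim_freq_shift_pre l1 l2 : (forall x, U l1 (T x) -> U l2 x) -> lim_freq l1 <= lim_freq l2.
Proof.
  intro H. apply (lim_freq_le_visits l1 l2 1). intro N.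
  destruct (visits_preimage (U l1) N) as [h _].
  assert (visits (fun x => U l1 (T x)) N <= visits (U l2) N)%nat by (apply count_in_mono; intros k _; apply H).
  lia.
Qed.

Lemma lim_freq_shift_post l1 l2 : (forall x, U l1 x -> U l2 (T x)) -> lim_freq l1 <= lim_freq l2.
Proof.
  intro H. apply (lim_freq_le_visits l1 l2 1). intro N.
  destruct (visits_preimage (U l2) N) as [_ h].
  assert (visits (U l1) N <= visits (fun x => U l2 (T x)) N)%nat by (apply count_in_mono; intros k _; apply H).
  lia.
Qed.

Lemma lim_freq_app l1 l2 : lim_freq (l1 ++ l2) <= lim_freq l1 + lim_freq l2.
Proof.
  apply (Rle_cv_lim (Un := fun k => freq (U (l1 ++ l2)) (freq_subseq k))
                    (Vn := fun k => freq (U l1) (freq_subseq k) + freq (U l2) (freq_subseq k)));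
    [|apply lim_freq_cv|apply CV_plus; apply lim_freq_cv].
  intro k. rewrite (pred_ext (U (l1 ++ l2)) (fun x => U l1 x \/ U l2 x)) by apply ball_union_app.
  apply freq_union.
Qed.

Lemma lim_freq_app_disjoint l1 l2 : (forall x, U l1 x -> U l2 x -> False) ->
  lim_freq (l1 ++ l2) = lim_freq l1 + lim_freq l2.
Proof.
  intro D. apply (UL_sequence (fun k => freq (U (l1 ++ l2)) (freq_subseq k))); [apply lim_freq_cv|].
  apply (Un_cv_ext (fun k => freq (U l1) (freq_subseq k) + freq (U l2) (freq_subseq k)));
    [|apply CV_plus; apply lim_freq_cv].
  intro k. rewrite (pred_ext (U (l1 ++ l2)) (fun x => U l1 x \/ U l2 x)) by apply ball_union_app.
  rewrite freq_union_disjoint; auto.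
Qed.

Lemma lim_freq_const l c : (forall N, freq (U l) N = c) -> lim_freq l = c.
Proof.
  intro H. apply (UL_sequence (fun k => freq (U l) (freq_subseq k))); [apply lim_freq_cv|].
  apply (Un_cv_ext (fun _ => c)); [intro k; rewrite H; auto|apply Un_cv_const].
Qed.

Lemma lim_freq_full l : (forall x, U l x) -> lim_freq l = 1.
Proof.
  intro H. apply lim_freq_const. intro N. unfold freq, visits.
  rewrite count_in_all by auto. field. apply not_0_INR; lia.
Qed.

Lemma lim_freq_nil : lim_freq nil = 0.
Proof.
  apply lim_freq_const. intro N. unfold freq, visits.
  rewrite count_in_none by (intros n [i [[] _]]). simpl. unfold Rdiv; ring.
Qed.

Lemma lim_freq_ge (F : X -> Prop) c :
  (forall l, (1 <= l)%nat -> c * INR l <= INR (count_in (fun n => F (iter T n z)) 0 l)) ->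
  forall l, (forall x, F x -> U l x) -> c <= lim_freq l.
Proof.
  intros Hfreq l HFl. apply (Un_cv_ge_const (fun k => freq (U l) (freq_subseq k)) c); [|apply lim_freq_cv].
  intro k. unfold freq. set (N := S (freq_subseq k)). specialize (Hfreq N ltac:(unfold N; lia)).
  assert (h : (count_in (fun n => F (iter T n z)) 0 N <= visits (U l) N)%nat)
    by (apply count_in_mono; intros j _; apply HFl).
  apply le_INR in h. assert (0 < INR N) by (apply lt_0_INR; unfold N; lia).
  apply (Rmult_le_reg_r (INR N)); auto. unfold Rdiv. rewrite Rmult_assoc, Rinv_l; lra.
Qed.

End Frequencies.

Theorem krylov_bogolyubov {X : Type} (d : X -> X -> R) (Hd : is_metric d) (Hcpt : compact_space d)
  (T : X -> X) (HT : continuous_map d T) (z : X) (F : X -> Prop) (c : R) : closed_set d F ->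
  (forall l, (1 <= l)%nat -> c * INR l <= INR (count_in (fun n => F (iter T n z)) 0 l)) ->
  exists mu : prob_measure d, invariant T mu /\ c <= mu F.
Proof.
  intros HF Hfreq.
  set (m := lim_freq d Hd Hcpt T z).
  exists (content_measure d Hd Hcpt z m (lim_freq_bounded d Hd Hcpt T z) (lim_freq_nil d Hd Hcpt T z)
            (lim_freq_full d Hd Hcpt T z) (lim_freq_mono d Hd Hcpt T z) (lim_freq_app d Hd Hcpt T z)
            (lim_freq_app_disjoint d Hd Hcpt T z)).
  split.
  - apply content_measure_invariant; auto.
    + apply lim_freq_shift_pre.
    + apply lim_freq_shift_post.
  - apply content_measure_ge; auto. apply lim_freq_ge; auto.
Qed.

Lemma argmin_upto (f : nat -> R) L : exists j, (j <= L)%nat /\ forall i, (i <= L)%nat -> f j <= f i.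
Proof.
  induction L.
  - exists O; split; auto. intros i hi; replace i with O by lia; lra.
  - destruct IHL as [j [hj H]]. destruct (Rle_dec (f j) (f (S L))) as [h|h].
    + exists j; split; auto. intros i hi. destruct (Nat.eq_dec i (S L)); [subst; auto|]. apply H; lia.
    + exists (S L); split; auto. intros i hi. destruct (Nat.eq_dec i (S L)); [subst; lra|].
      specialize (H i ltac:(lia)). lra.
Qed.

(* Start a long window of density above 2c at the minimum of [count - c * length]:
   every initial segment of bounded length from there has density at least c. *)
Lemma dense_windows_from_start (F : nat -> Prop) c : 0 < c ->
  (forall N, exists a L, (N <= L)%nat /\ 2 * c * INR L < INR (count_in F a L)) ->
  forall K, exists b, forall l, (l <= K)%nat -> c * INR l <= INR (count_in F b l).
Proof.
  intros Hc Hwin K.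
  destruct (eventually_inv_succ_lt (c / INR (S K))) as [J HJ].
  { apply Rdiv_lt_0_compat; auto. apply lt_0_INR; lia. }
  assert (HKJ : INR (S K) < c * INR (S J)).
  { specialize (HJ J (le_n _)). assert (0 < INR (S J)) by (apply lt_0_INR; lia).
    assert (0 < INR (S K)) by (apply lt_0_INR; lia).
    apply (Rmult_lt_compat_r (INR (S J) * INR (S K))) in HJ; [|apply Rmult_lt_0_compat; auto].
    replace (/ INR (S J) * (INR (S J) * INR (S K))) with (INR (S K)) in HJ by (field; lra).
    replace (c / INR (S K) * (INR (S J) * INR (S K))) with (c * INR (S J)) in HJ by (field; lra). auto. }
  destruct (Hwin (S J)) as [a [L [hL Hdense]]].
  destruct (argmin_upto (fun j => INR (count_in F a j) - c * INR j) L) as [j [hj Hj]].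
  exists (a + j)%nat. intros l hl.
  destruct (le_lt_dec (j + l) L) as [hjl|hjl].
  - specialize (Hj (j + l)%nat hjl). rewrite count_in_add, !plus_INR in Hj. lra.
  - exfalso.
    assert (Hj0 := Hj O ltac:(lia)). simpl count_in in Hj0. simpl INR in Hj0.
    assert (hrest : (count_in F (a + j) (L - j) <= L - j)%nat) by apply count_in_le.
    assert (hs := count_in_add F a j (L - j)). replace (j + (L - j))%nat with L in hs by lia.
    rewrite hs, plus_INR in Hdense. apply le_INR in hrest. rewrite minus_INR in hrest by lia.
    assert (INR j <= INR L) by (apply le_INR; auto).
    assert (INR L < INR j + INR l) by (rewrite <- plus_INR; apply lt_INR; lia).
    assert (INR l <= INR K) by (apply le_INR; auto).
    assert (INR (S J) <= INR L) by (apply le_INR; auto).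
    rewrite S_INR in HKJ. nra.
Qed.

Section Dynamics.
Context {X : Type}.
Variable d : X -> X -> R.
Hypotheses (Hd : is_metric d) (Hcpt : compact_space d).
Variable T : X -> X.
Hypothesis HT : continuous_map d T.

Lemma iter_S n x : iter T (S n) x = T (iter T n x). Proof. reflexivity. Qed.

Lemma iter_add a n x : iter T (a + n) x = iter T n (iter T a x).
Proof. induction n; [rewrite Nat.add_0_r; auto|]. rewrite Nat.add_succ_r, !iter_S, IHn; auto. Qed.

Lemma iter_fixed p n : T p = p -> iter T n p = p.
Proof. intro H; induction n; auto. rewrite iter_S, IHn; auto. Qed.

Lemma continuous_iter n : continuous_map d (iter T n).
Proof. induction n; [apply continuous_id|]. apply (continuous_comp d T (iter T n)); auto. Qed.

Lemma iterates_close_nearby u v eps l : exists r, 0 < r /\ forall w1 w2, d w1 u < r -> d w2 v < r ->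
  forall n, (n < l)%nat -> d (iter T n u) (iter T n v) < eps -> d (iter T n w1) (iter T n w2) < eps.
Proof.
  induction l.
  - exists 1; split; [lra|]. intros; lia.
  - destruct IHl as [r0 [Hr0 H0]].
    destruct (Rlt_dec (d (iter T l u) (iter T l v)) eps) as [hl|hl].
    + set (s := eps - d (iter T l u) (iter T l v)).
      destruct (continuous_iter l u (s/2) ltac:(unfold s; lra)) as [d1 [hd1 H1]].
      destruct (continuous_iter l v (s/2) ltac:(unfold s; lra)) as [d2 [hd2 H2]].
      exists (Rmin r0 (Rmin d1 d2)). split; [repeat apply Rmin_pos; auto|].
      intros w1 w2 h1 h2 n hn hnear.
      assert (m1 := Rmin_l r0 (Rmin d1 d2)). assert (m2 := Rmin_r r0 (Rmin d1 d2)).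
      assert (Rmin d1 d2 <= d1) by apply Rmin_l. assert (Rmin d1 d2 <= d2) by apply Rmin_r.
      destruct (Nat.eq_dec n l) as [->|hne]; [|apply H0; try lra; lia].
      rewrite (dist_sym d Hd w1) in h1. rewrite (dist_sym d Hd w2) in h2.
      specialize (H1 w1 ltac:(lra)). specialize (H2 w2 ltac:(lra)).
      assert (t1 := dist_triangle d Hd (iter T l w1) (iter T l u) (iter T l w2)).
      assert (t2 := dist_triangle d Hd (iter T l u) (iter T l v) (iter T l w2)).
      rewrite (dist_sym d Hd (iter T l w1) (iter T l u)) in t1. unfold s in *. lra.
    + exists r0; split; auto. intros w1 w2 h1 h2 n hn hnear.
      destruct (Nat.eq_dec n l) as [->|hne]; [contradiction|apply H0; auto; lia].
Qed.

(* a cluster point of a sequence of points that T moves less and less is fixed *)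
Lemma proximal_fixed_point : inhabited X -> proximal d T -> exists p, T p = p.
Proof.
  intros [x] Hp.
  assert (H : forall k, exists n, (k <= n)%nat /\ d (iter T n x) (iter T n (T x)) < / INR (S k))
    by (intro k; apply Hp, inv_succ_pos).
  set (nk := fun k => proj1_sig (constructive_indefinite_description _ (H k))).
  assert (Hnk : forall k, d (iter T (nk k) x) (T (iter T (nk k) x)) < / INR (S k)).
  { intro k. unfold nk. destruct constructive_indefinite_description as [n [hkn h]]. simpl.
    rewrite <- iter_S. replace (S n) with (1 + n)%nat by lia. rewrite iter_add. auto. }
  destruct (cluster_point_exists d Hd Hcpt (fun k => iter T (nk k) x)) as [p Hp'].
  exists p. symmetry. apply (dist_small_eq d Hd). intros e He.
  destruct (HT p (e/3) ltac:(lra)) as [del [Hdel HTd]].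
  destruct (eventually_inv_succ_lt (e/3) ltac:(lra)) as [J HJ].
  destruct (Hp' (Rmin del (e/3)) ltac:(apply Rmin_pos; lra) J) as [k [hk hd]].
  set (s := iter T (nk k) x) in *.
  assert (h1 : d s p < del) by (eapply Rlt_le_trans; [apply hd|apply Rmin_l]).
  assert (h2 : d s p < e/3) by (eapply Rlt_le_trans; [apply hd|apply Rmin_r]).
  assert (h3 := HTd s ltac:(rewrite (dist_sym d Hd); auto)).
  assert (h4 := Hnk k). fold s in h4. assert (h5 := HJ k hk).
  assert (t1 := dist_triangle d Hd p s (T p)). assert (t2 := dist_triangle d Hd s (T s) (T p)).
  rewrite (dist_sym d Hd p s) in t1. rewrite (dist_sym d Hd (T s) (T p)) in t2. lra.
Qed.

Definition far_times (u v : X) eps n := eps <= d (iter T n u) (iter T n v).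

Lemma count_far_times_compl u v eps a L :
  count_in (far_times u v eps) a L = (L - count_in (fun n => (d (iter T n u) (iter T n v) < eps)%R) a L)%nat.
Proof.
  assert (h := count_in_compl (fun n => d (iter T n u) (iter T n v) < eps) a L). cbv beta in h.
  rewrite (count_in_ext (fun n => ~ d (iter T n u) (iter T n v) < eps) (far_times u v eps)) in h; [lia|].
  intros; unfold far_times; split; intros; lra.
Qed.

Lemma not_banach_proximal_windows x y : ~ banach_proximal d T x y ->
  exists eps c, 0 < eps /\ 0 < c /\
    forall K, exists b, forall l, (l <= K)%nat -> c * INR l <= INR (count_in (far_times x y eps) b l).
Proof.
  intro H. assert (H1 : exists eps, 0 < eps /\ ~ banach_density_one (fun n => d (iter T n x) (iter T n y) < eps)).
  { apply NNPP; intro h. apply H. intros eps he. apply NNPP; intro h'. apply h; eauto. }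
  destruct H1 as [eps [Heps H1]]. destruct (not_banach_density_one _ H1) as [lam [hlam H2]].
  exists eps, ((1 - lam) / 2). split; [auto|split; [lra|]].
  apply dense_windows_from_start; [lra|]. intro N.
  destruct (H2 (S N) ltac:(lia)) as [a [L [hL hc]]]. exists a, L. split; [lia|].
  rewrite count_far_times_compl, minus_INR by apply count_in_le. lra.
Qed.

(* A limit pair of the starting points of the windows inherits their density of far times. *)
Lemma not_banach_proximal_limit_pair x y : ~ banach_proximal d T x y ->
  exists eps c u v, 0 < eps /\ 0 < c /\
    (forall l, (1 <= l)%nat -> c * INR l <= INR (count_in (far_times u v eps) 0 l)) /\
    (forall r, 0 < r -> exists a, d (iter T a y) v < r).
Proof.
  intro H. destruct (not_banach_proximal_windows x y H) as [eps [c [Heps [Hc W]]]].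
  set (b := fun k => proj1_sig (constructive_indefinite_description _ (W k))).
  assert (Hb : forall k l, (l <= k)%nat -> c * INR l <= INR (count_in (far_times x y eps) (b k) l)).
  { intro k; unfold b; destruct constructive_indefinite_description; auto. }
  destruct (common_cluster_point d Hd Hcpt (fun k => iter T (b k) x) (fun k => iter T (b k) y))
    as [u [v Huv]].
  exists eps, c, u, v. repeat split; auto.
  - intros l hl. destruct (iterates_close_nearby u v eps l) as [r [hr Hr]].
    destruct (Huv r hr l) as [k [hk [h1 h2]]].
    assert (hcm : (count_in (fun n => (d (iter T n u) (iter T n v) < eps)%R) 0 l <=
                   count_in (fun n => (d (iter T n (iter T (b k) x)) (iter T n (iter T (b k) y)) < eps)%R) 0 l)%nat).
    { apply count_in_mono. intros n hn hnear. apply Hr; auto. }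
    assert (E : count_in (far_times x y eps) (b k) l =
                (l - count_in (fun n => (d (iter T n (iter T (b k) x)) (iter T n (iter T (b k) y)) < eps)%R) 0 l)%nat).
    { rewrite count_far_times_compl, count_in_shift. f_equal. apply count_in_ext.
      intros j _. rewrite !iter_add. tauto. }
    specialize (Hb k l hk). rewrite E in Hb. rewrite count_far_times_compl.
    apply le_INR in hcm. rewrite !minus_INR in * by apply count_in_le. lra.
  - intros r hr. destruct (Huv r hr O) as [k [_ [_ h2]]]. exists (b k); auto.
Qed.

End Dynamics.

Lemma sum_below_small_term (f : nat -> R) N m e : (forall k, 0 <= f k) -> (N <= m)%nat ->
  sum_below f m < e * (INR m - INR N) -> exists n, (N <= n)%nat /\ (n < m)%nat /\ f n <= e.
Proof.
  intros H hNm Hsum. apply NNPP; intro hn.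
  assert (h := sum_below_tail_ge f N m e H hNm).
  assert (Hf : forall n, (N <= n)%nat -> (n < m)%nat -> e <= f n).
  { intros n h1 h2. apply Rnot_lt_le. intro h3. apply hn. exists n; repeat split; auto; lra. }
  specialize (h Hf). lra.
Qed.

Section Implications.
Context {X : Type}.
Variable d : X -> X -> R.
Hypotheses (Hd : is_metric d) (Hcpt : compact_space d).
Variable T : X -> X.
Hypothesis HT : continuous_map d T.

Lemma borel_point p : borel d (fun w => w = p).
Proof. apply borel_closed, closed_point; auto. Qed.

Lemma borel_dist_ge p r : borel d (fun w => r <= d w p).
Proof. apply borel_closed, closed_dist_ge; auto. Qed.

Lemma borel_iter_preimage n A : borel d A -> borel d (fun x => A (iter T n x)).
Proof. intro HA. apply borel_preimage; auto. apply continuous_iter; auto. Qed.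

Lemma invariant_iter (mu : prob_measure d) : invariant T mu -> forall n A, borel d A ->
  mu (fun x => A (iter T n x)) = mu A.
Proof.
  intros Hinv n. induction n; intros A HA; [reflexivity|].
  change (mu (fun x => (fun y => A (T y)) (iter T n x)) = mu A). rewrite IHn; [apply Hinv; auto|].
  apply borel_preimage; auto.
Qed.

Lemma dirac_invariant p : T p = p -> invariant T (dirac d p).
Proof. intros Hp A HA. simpl. unfold dirac_f. rewrite Hp. reflexivity. Qed.

Lemma point_mass_dirac (mu : prob_measure d) p : mu (fun w => w = p) = 1 ->
  forall A, borel d A -> mu A = dirac_f p A.
Proof.
  intros H1 A HA. assert (Hp := borel_point p).
  unfold dirac_f. destruct excluded_middle_informative as [h|h].
  - apply Rle_antisym; [apply pm_le1; auto|]. rewrite <- H1. apply pm_mono; auto. intros x ->; auto.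
  - apply Rle_antisym; [|apply pm_nonneg; auto]. rewrite <- (Rminus_diag 1). rewrite <- H1 at 2.
    rewrite <- pm_compl by auto. apply pm_mono; auto; [apply borel_compl; auto|]. intros x hx ->; auto.
Qed.

Lemma point_mass_of_null_far (mu : prob_measure d) p :
  (forall r, 0 < r -> mu (fun w => r <= d w p) <= 0) -> mu (fun w => w = p) = 1.
Proof.
  intro H. assert (Hp := borel_point p).
  set (A := fun n w => / INR (S n) <= d w p).
  assert (Hinc : forall n x, A n x -> A (S n) x).
  { intros n x h. unfold A in *. eapply Rle_trans; [|apply h].
    apply Rinv_le_contravar; [apply lt_0_INR; lia|apply le_INR; lia]. }
  assert (E : mu (fun x => exists n, A n x) = 1 - mu (fun w => w = p)).
  { rewrite <- pm_compl by auto. apply pm_ext. intro x; split.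
    - intros [n h] ->. unfold A in h. rewrite dist_refl in h; auto. assert (h' := inv_succ_pos n). lra.
    - intro h. destruct (eventually_inv_succ_lt _ (dist_pos d Hd x p h)) as [J HJ].
      exists J. left; apply HJ; lia. }
  assert (Hle : mu (fun x => exists n, A n x) <= 0).
  { apply Rnot_lt_le; intro hlt.
    destruct (pm_continuous_increasing mu A (fun n => borel_dist_ge p _) Hinc _ hlt) as [N HN].
    specialize (H _ (inv_succ_pos N)). fold (A N) in H. lra. }
  assert (h1 := pm_le1 mu _ Hp). lra.
Qed.

(** ** (1) => (2) *)

Lemma strongly_proximal_proximal : strongly_proximal d T -> proximal d T.
Proof.
  intros HSP x y eps Heps N.
  destruct (HSP (dirac d x) (dirac d y) (Rmin eps 1) ltac:(apply Rmin_pos; lra) N)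
    as [n [hn [e' [he' [he'e Hpl]]]]].
  exists n; split; auto.
  destruct (Hpl (fun w => w = iter T n x) (borel_point _)) as [h _].
  unfold pushn in h. simpl in h. unfold dirac_f in h.
  destruct excluded_middle_informative as [_|hn']; [|exfalso; auto].
  assert (Rmin eps 1 <= eps) by apply Rmin_l. assert (Rmin eps 1 <= 1) by apply Rmin_r.
  destruct excluded_middle_informative as [[a [-> ha]]|hn']; [|lra].
  rewrite (dist_sym d Hd). lra.
Qed.

(* T^n mu stays mu while T^n (dirac p) stays dirac p, so Prokhorov closeness forces mu = dirac p *)
Lemma strongly_proximal_invariant_dirac p : strongly_proximal d T -> T p = p ->
  forall mu : prob_measure d, invariant T mu -> forall A, borel d A -> mu A = dirac_f p A.
Proof.
  intros HSP Hp mu Hmu. apply point_mass_dirac, point_mass_of_null_far. intros r hr.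
  apply Rnot_lt_le; intro hlt.
  set (e := Rmin (mu (fun w => r <= d w p)) r).
  assert (he : 0 < e) by (apply Rmin_pos; auto).
  destruct (HSP mu (dirac d p) e he O) as [n [_ [e' [he' [he'e Hpl]]]]].
  destruct (Hpl (fun w => r <= d w p) (borel_dist_ge p r)) as [h _].
  assert (E1 : pushn T n mu (fun w => r <= d w p) = mu (fun w => r <= d w p))
    by apply (invariant_iter mu Hmu n _ (borel_dist_ge p r)).
  assert (E2 : forall B, pushn T n (dirac d p) B = dirac_f p B)
    by (intro B; unfold pushn; simpl; unfold dirac_f; rewrite iter_fixed; auto).
  rewrite E1, E2 in h. unfold dirac_f in h.
  assert (e <= r) by apply Rmin_r. assert (e <= mu (fun w => r <= d w p)) by apply Rmin_l.
  destruct excluded_middle_informative as [[a [ha1 ha2]]|hn']; [|lra].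
  rewrite (dist_sym d Hd) in ha2. lra.
Qed.

Lemma strongly_proximal_uniquely_ergodic : inhabited X ->
  strongly_proximal d T -> proximal d T /\ uniquely_ergodic d T.
Proof.
  intros Hne HSP. assert (Hprox := strongly_proximal_proximal HSP). split; auto.
  destruct (proximal_fixed_point d Hd Hcpt T HT Hne Hprox) as [p Hp]. split.
  - exists (dirac d p); apply dirac_invariant; auto.
  - intros mu nu Hmu Hnu A HA.
    rewrite (strongly_proximal_invariant_dirac p HSP Hp mu Hmu A HA),
            (strongly_proximal_invariant_dirac p HSP Hp nu Hnu A HA). auto.
Qed.

Lemma uniquely_ergodic_point_support : inhabited X -> proximal d T -> uniquely_ergodic d T ->
  exists x0, is_system_support d T (fun x => x = x0).
Proof.
  intros Hne Hprox [_ HUE]. destruct (proximal_fixed_point d Hd Hcpt T HT Hne Hprox) as [p Hp].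
  exists p. split; [apply closed_point; auto|split].
  - intros mu Hmu. rewrite (HUE mu (dirac d p) Hmu (dirac_invariant p Hp)) by apply borel_point.
    simpl; unfold dirac_f; destruct excluded_middle_informative; tauto.
  - intros C' HC' H x ->. specialize (H (dirac d p) (dirac_invariant p Hp)). simpl in H. unfold dirac_f in H.
    destruct excluded_middle_informative; auto. lra.
Qed.

(** ** (3) => (4) *)

(* If mu {x0} = 1 and mu {w | T w = x0} = 1 for an invariant mu, then T x0 = x0, since these sets
   are disjoint otherwise; an invariant measure exists because the support is nonempty. *)
Lemma point_support_fixed x0 : is_system_support d T (fun x => x = x0) ->
  T x0 = x0 /\ forall mu : prob_measure d, invariant T mu -> mu (fun x => x = x0) = 1.
Proof.
  intros [_ [H1 H2]]. split; auto.
  assert (Hex : exists mu : prob_measure d, invariant T mu).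
  { apply NNPP; intro h. apply (H2 (fun _ => False) (closed_empty d)) with x0; auto.
    intros mu hmu. exfalso; eauto. }
  destruct Hex as [mu Hmu]. apply NNPP; intro hne.
  assert (HTp : borel d (fun w => T w = x0)) by (apply (borel_preimage d T (fun w => w = x0)); auto; apply borel_point).
  assert (E : mu (fun w => T w = x0) = 1) by (rewrite <- (H1 mu Hmu); apply (Hmu _ (borel_point x0))).
  assert (Hs := pm_add mu (fun w => w = x0) (fun w => T w = x0) (borel_point x0) HTp ltac:(intros x -> h; auto)).
  rewrite E, (H1 mu Hmu) in Hs.
  assert (h := pm_le1 mu (fun x => x = x0 \/ T x = x0) ltac:(apply borel_union; auto; apply borel_point)).
  lra.
Qed.

(* A point not Banach proximal to the fixed point x0 yields, via a limit pair and Krylov-Bogolyubov,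
   an invariant measure charging {w | eps <= d w x0}. *)
Lemma banach_proximal_to_support x x0 : T x0 = x0 ->
  (forall mu : prob_measure d, invariant T mu -> mu (fun x => x = x0) = 1) -> banach_proximal d T x x0.
Proof.
  intros Hfix Hmass. apply NNPP; intro hn.
  destruct (not_banach_proximal_limit_pair d Hd Hcpt T HT x x0 hn) as [eps [c [u [v [he [hc [Hf Hv]]]]]]].
  assert (Hv0 : v = x0).
  { symmetry. apply (dist_small_eq d Hd). intros r hr. destruct (Hv r hr) as [a ha]. rewrite iter_fixed in ha; auto. }
  subst v.
  destruct (krylov_bogolyubov d Hd Hcpt T HT u (fun w => eps <= d w x0) c) as [mu [Hmu Hc]].
  - apply closed_dist_ge; auto.
  - intros l hl. specialize (Hf l hl). rewrite (count_in_ext _ (far_times d T u x0 eps)); [apply Hf|].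
    intros k _. unfold far_times. rewrite (iter_fixed T x0); auto. tauto.
  - rewrite (point_mass_dirac mu x0 (Hmass mu Hmu)) in Hc by apply borel_dist_ge.
    unfold dirac_f in Hc. destruct excluded_middle_informative as [h|h]; [rewrite dist_refl in h; auto|]; lra.
Qed.

Lemma point_support_banach_proximal x0 : is_system_support d T (fun x => x = x0) ->
  forall x y, banach_proximal d T x y.
Proof.
  intros Hsup. destruct (point_support_fixed x0 Hsup) as [Hfix Hmass].
  intros x y eps heps.
  apply (banach_density_one_and _ _ _ (banach_proximal_to_support x x0 Hfix Hmass (eps/2) ltac:(lra))
                                      (banach_proximal_to_support y x0 Hfix Hmass (eps/2) ltac:(lra))).
  intros n h1 h2. rewrite (iter_fixed T x0 n Hfix) in h1, h2.
  assert (t := dist_triangle d Hd (iter T n x) x0 (iter T n y)). rewrite (dist_sym d Hd x0) in t. lra.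
Qed.

(** ** (4) => (1) *)

Lemma borel_count (B : nat -> X -> Prop) : (forall n, borel d (B n)) -> forall m (P : nat -> Prop),
  borel d (fun x => P (count_in (fun n => B n x) 0 m)).
Proof.
  intros HB m. induction m; intro P; [cbn [count_in]; apply (borel_const d)|].
  apply (borel_ext d (fun x => (B m x /\ P (count_in (fun n => B n x) 0 m + 1)%nat) \/
                              (~ B m x /\ P (count_in (fun n => B n x) 0 m)))).
  - intro x. simpl. destruct excluded_middle_informative as [h|h]; [tauto|]. rewrite Nat.add_0_r. tauto.
  - apply borel_union; apply borel_inter; auto.
    + apply (IHm (fun k => P (k + 1)%nat)).
    + apply borel_compl; auto.
Qed.

(* integrate the pointwise bound on the number of sets B n containing x, splitting W along B (m-1) *)
Lemma sum_pm_le_count_bound (mu : prob_measure d) (B : nat -> X -> Prop) : (forall n, borel d (B n)) ->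
  forall m b W, borel d W -> (forall x, W x -> INR (count_in (fun n => B n x) 0 m) <= b) ->
  sum_below (fun n => mu (fun x => B n x /\ W x)) m <= b * mu W.
Proof.
  intros HB m. induction m; intros b W HW Hc.
  - simpl. destruct (classic (exists x, W x)) as [[x hx]|hn].
    + specialize (Hc x hx). simpl in Hc. assert (0 <= mu W) by (apply pm_nonneg; auto). nra.
    + rewrite (pm_empty_set mu W) by (intros x hx; eauto). lra.
  - set (W1 := fun x => W x /\ B m x). set (W2 := fun x => W x /\ ~ B m x).
    assert (HW1 : borel d W1) by (apply borel_inter; auto).
    assert (HW2 : borel d W2) by (apply borel_inter; auto; apply borel_compl; auto).
    assert (Hsplit : forall n, mu (fun x => B n x /\ W x) = mu (fun x => B n x /\ W1 x) + mu (fun x => B n x /\ W2 x)).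
    { intro n. rewrite <- pm_add; try (apply borel_inter; auto); [|intros x [_ [_ h]] [_ [_ h']]; auto].
      apply pm_ext. intro x; unfold W1, W2; split; [|tauto]. intros [h1 h2]. destruct (classic (B m x)); tauto. }
    assert (HWs : mu W = mu W1 + mu W2).
    { rewrite <- pm_add; auto; [|intros x [_ h] [_ h']; auto].
      apply pm_ext. intro x; unfold W1, W2; split; [|tauto]. intro h. destruct (classic (B m x)); tauto. }
    assert (IH1 := IHm (b - 1) W1 HW1 ltac:(intros x [hx hb]; specialize (Hc x hx); simpl in Hc;
       destruct excluded_middle_informative; [|contradiction]; rewrite plus_INR in Hc; simpl in Hc; lra)).
    assert (IH2 := IHm b W2 HW2 ltac:(intros x [hx hb]; specialize (Hc x hx); simpl in Hc;
       destruct excluded_middle_informative; [contradiction|]; rewrite Nat.add_0_r in Hc; auto)).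
    cbn [sum_below]. rewrite (sum_below_ext _ _ m Hsplit), sum_below_plus.
    rewrite (pm_ext mu (fun x => B m x /\ W x) W1) by (intro x; unfold W1; tauto).
    rewrite HWs. nra.
Qed.

(* If every orbit visits F with density eventually below dl, then so does mu on average:
   outside a set G M of mass below dl all orbits have density below dl after time M. *)
Lemma average_visits_small (mu : prob_measure d) (F : X -> Prop) : borel d F ->
  (forall x dl, 0 < dl -> exists M, forall m, (M <= m)%nat ->
     INR (count_in (fun n => F (iter T n x)) 0 m) <= dl * INR m) ->
  forall dl, 0 < dl -> exists M, forall m, (M <= m)%nat ->
    sum_below (fun n => mu (fun x => F (iter T n x))) m <= 2 * dl * INR m.
Proof.
  intros HF Hx dl hdl.
  assert (HB : forall n, borel d (fun x => F (iter T n x))) by (intro n; apply borel_iter_preimage; auto).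
  set (E := fun m x => INR (count_in (fun n => F (iter T n x)) 0 m) <= dl * INR m).
  assert (HE : forall m, borel d (E m))
    by (intro m; apply (borel_count (fun n x => F (iter T n x)) HB m (fun k => INR k <= dl * INR m))).
  set (G := fun M x => exists m, (M <= m)%nat /\ ~ E m x).
  assert (HG : forall M, borel d (G M)).
  { intro M. apply borel_countable_union. intro m. apply borel_inter; [apply (borel_const d)|apply borel_compl; auto]. }
  destruct (pm_continuous_decreasing mu G HG) with (e := dl) as [M HM]; auto.
  { intros n x [m [hm h]]. exists m; split; auto; lia. }
  { intro x. destruct (Hx x dl hdl) as [M HM]. exists M. intros [m [hm h]]. apply h, HM; auto. }
  exists M. intros m hm.
  assert (H1 : forall n, mu (fun x => F (iter T n x)) <= mu (fun x => F (iter T n x) /\ E m x) + mu (G M)).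
  { intro n.
    rewrite (pm_ext mu (fun x => F (iter T n x)) (fun x => (F (iter T n x) /\ E m x) \/ (F (iter T n x) /\ ~ E m x)))
      by (intro x; split; [intro h; destruct (classic (E m x)); auto|tauto]).
    assert (HnE : borel d (fun x => F (iter T n x) /\ ~ E m x)) by (apply borel_inter; auto; apply borel_compl; auto).
    rewrite pm_add; auto; [|apply borel_inter; auto|intros x [_ h] [_ h']; auto].
    apply Rplus_le_compat_l. apply pm_mono; auto. intros x [_ h]. exists m; split; auto. }
  eapply Rle_trans; [apply (sum_below_le _ _ m H1)|]. rewrite sum_below_plus, sum_below_const.
  assert (H2 := sum_pm_le_count_bound mu (fun n x => F (iter T n x)) HB m (dl * INR m) (E m) (HE m)
                  ltac:(intros x hx; apply hx)).
  assert (h1 := pm_le1 mu (E m) (HE m)). assert (h2 := pm_nonneg mu (HE m)).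
  assert (0 <= INR m) by apply pos_INR.
  assert (dl * INR m * mu (E m) <= dl * INR m) by (assert (0 <= dl * INR m) by nra; nra).
  assert (INR m * mu (G M) <= INR m * dl) by nra. lra.
Qed.

Lemma open_eps_nbhd A e : open_set d (eps_nbhd d A e).
Proof.
  apply (open_ext d (fun x => exists a : X, A a /\ d x a < e)); [intro; unfold eps_nbhd; tauto|].
  apply open_union. intro a. destruct (classic (A a)) as [h|h].
  - apply (open_ext d (fun x => d x a < e)); [intro; tauto|]. apply open_ball; auto.
  - apply (open_ext d (fun _ => False)); [intro; tauto|]. apply open_empty.
Qed.

(* Both measures put mass at most e outside the e/2-ball about p at time n; either A misses that
   ball, and then has mass at most e, or it meets it, and then its e-neighbourhood contains the ball. *)
Lemma prokhorov_of_concentration (al be : prob_measure d) n e p :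
  al (fun x => e / 2 <= d (iter T n x) p) <= e -> be (fun x => e / 2 <= d (iter T n x) p) <= e ->
  forall A, borel d A -> pushn T n al A <= pushn T n be (eps_nbhd d A e) + e.
Proof.
  intros Ha Hb A HA. unfold pushn.
  assert (HAn := borel_iter_preimage n A HA).
  assert (HFn := borel_iter_preimage n _ (borel_dist_ge p (e/2))).
  assert (HNn := borel_iter_preimage n _ (borel_open d _ (open_eps_nbhd A e))).
  destruct (classic (exists a, A a /\ d a p < e / 2)) as [[a [ha hap]]|hn].
  - assert (h1 : be (fun x => ~ e / 2 <= d (iter T n x) p) <= be (fun x => eps_nbhd d A e (iter T n x))).
    { apply pm_mono; auto; [apply borel_compl; auto|]. intros x hx. exists a; split; auto.
      assert (t := dist_triangle d Hd (iter T n x) p a). rewrite (dist_sym d Hd p a) in t. lra. }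
    rewrite pm_compl in h1 by auto. assert (h2 := pm_le1 al _ HAn). assert (h3 := pm_nonneg al HAn). lra.
  - assert (h1 : al (fun x => A (iter T n x)) <= al (fun x => e / 2 <= d (iter T n x) p)).
    { apply pm_mono; auto. intros x hx. apply Rnot_lt_le; intro h. apply hn; eauto. }
    assert (h2 := pm_nonneg be HNn). lra.
Qed.

Lemma banach_proximal_proximal : (forall x y, banach_proximal d T x y) -> proximal d T.
Proof. intros H x y eps he N. apply (banach_density_one_unbounded _ (H x y eps he) N). Qed.

Lemma banach_proximal_visits_far (p : X) e : T p = p -> (forall x, banach_proximal d T x p) -> 0 < e ->
  forall x dl, 0 < dl -> exists M, forall m, (M <= m)%nat ->
    INR (count_in (fun n => e <= d (iter T n x) p) 0 m) <= dl * INR m.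
Proof.
  intros Hp HBP he x dl hdl. destruct (HBP x e he (1 - dl) ltac:(lra)) as [M [hM HM]].
  exists M. intros m hm. specialize (HM 0%nat m hm).
  assert (E : count_in (fun n => e <= d (iter T n x) p) 0 m = count_in (far_times d T x p e) 0 m).
  { apply count_in_ext. intros k _. unfold far_times. rewrite (iter_fixed T p); auto. tauto. }
  rewrite E, count_far_times_compl, minus_INR by apply count_in_le. lra.
Qed.

Lemma banach_proximal_strongly_proximal : inhabited X ->
  (forall x y, banach_proximal d T x y) -> strongly_proximal d T.
Proof.
  intros Hne HBP mu nu eps heps N.
  destruct (proximal_fixed_point d Hd Hcpt T HT Hne (banach_proximal_proximal HBP)) as [p Hp].
  set (e := Rmin eps 1 / 2).
  assert (0 < Rmin eps 1) by (apply Rmin_pos; lra). assert (Rmin eps 1 <= eps) by apply Rmin_l.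
  assert (he : 0 < e) by (unfold e; lra). assert (hee : e < eps) by (unfold e; lra).
  set (F := fun w => e / 2 <= d w p).
  assert (Hfar := banach_proximal_visits_far p (e/2) Hp (fun x => HBP x p) ltac:(lra)).
  destruct (average_visits_small mu F (borel_dist_ge p _) Hfar (e/8) ltac:(lra)) as [M1 HM1].
  destruct (average_visits_small nu F (borel_dist_ge p _) Hfar (e/8) ltac:(lra)) as [M2 HM2].
  set (m := (M1 + M2 + 2 * N + 2)%nat).
  specialize (HM1 m ltac:(unfold m; lia)). specialize (HM2 m ltac:(unfold m; lia)).
  set (f := fun n => mu (fun x => F (iter T n x)) + nu (fun x => F (iter T n x))).
  assert (Hf0 : forall n, 0 <= f n).
  { intro n. assert (B := borel_iter_preimage n F (borel_dist_ge p _)).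
    assert (h1 := pm_nonneg mu B). assert (h2 := pm_nonneg nu B). unfold f; lra. }
  destruct (sum_below_small_term f N m e Hf0 ltac:(unfold m; lia)) as [n [hn1 [hn2 hn3]]].
  { unfold f. rewrite sum_below_plus.
    assert (hm : INR m = INR (M1 + M2) + 2 * INR N + 2) by (unfold m; rewrite !plus_INR, mult_INR; simpl; lra).
    assert (0 <= INR (M1 + M2)) by apply pos_INR. assert (0 <= INR N) by apply pos_INR.
    assert (e * (INR m - INR N) > 2 * (e / 8) * INR m + 2 * (e / 8) * INR m) by (rewrite hm; nra). lra. }
  assert (B := borel_iter_preimage n F (borel_dist_ge p _)).
  assert (h1 := pm_nonneg mu B). assert (h2 := pm_nonneg nu B). unfold f in hn3.
  exists n; split; auto. exists e; split; auto; split; auto.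
  intros A HA. split; apply (prokhorov_of_concentration _ _ n e p); auto; unfold F in *; lra.
Qed.

(** ** (4) <=> (5) *)

Lemma banach_proximal_upper_density_one : (forall x y, banach_proximal d T x y) ->
  forall x y eps, 0 < eps -> upper_density_is (fun n => d (iter T n x) (iter T n y) < eps) 1.
Proof.
  intros H x y eps he dl hdl. split.
  - exists O. intros n _ hn. assert (h := count_in_le (fun n => d (iter T n x) (iter T n y) < eps) 0 n).
    apply le_INR in h. assert (0 < INR n) by (apply lt_0_INR; lia).
    assert (INR (count_in (fun n => d (iter T n x) (iter T n y) < eps) 0 n) / INR n <= 1); [|lra].
    apply (Rmult_le_reg_r (INR n)); auto. unfold Rdiv. rewrite Rmult_assoc, Rinv_l; lra.
  - intro N. destruct (H x y eps he (1 - dl / 2) ltac:(lra)) as [N0 [hN0 HN0]].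
    exists (N + N0)%nat. split; [lia|split; [lia|]]. specialize (HN0 0%nat (N + N0)%nat ltac:(lia)).
    assert (0 < INR (N + N0)) by (apply lt_0_INR; lia).
    apply (Rmult_lt_reg_r (INR (N + N0))); auto. unfold Rdiv. rewrite Rmult_assoc, Rinv_l by lra.
    assert (0 < dl * INR (N + N0)) by nra. nra.
Qed.

Lemma upper_density_one_banach_proximal :
  (forall x y eps, 0 < eps -> upper_density_is (fun n => d (iter T n x) (iter T n y) < eps) 1) ->
  forall x y, banach_proximal d T x y.
Proof.
  intros H x y. apply NNPP; intro hn.
  destruct (not_banach_proximal_limit_pair d Hd Hcpt T HT x y hn) as [eps [c [u [v [he [hc [Hf _]]]]]]].
  destruct (H u v eps he (c/2) ltac:(lra)) as [_ H2]. destruct (H2 1%nat) as [n [_ [hn1 hn2]]].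
  specialize (Hf n hn1). rewrite count_far_times_compl, minus_INR in Hf by apply count_in_le.
  assert (0 < INR n) by (apply lt_0_INR; lia).
  apply (Rmult_lt_compat_r (INR n)) in hn2; auto. unfold Rdiv in hn2. rewrite Rmult_assoc, Rinv_l in hn2 by lra.
  assert (0 < c * INR n) by nra. nra.
Qed.

End Implications.

Theorem mainTheorem1 (X : Type) (d : X -> X -> R) (T : X -> X)
  (Hd : is_metric d) (Hcpt : compact_space d) (Hne : inhabited X)
  (HT : continuous_map d T) :
  (strongly_proximal d T <-> (proximal d T /\ uniquely_ergodic d T)) /\
  ((proximal d T /\ uniquely_ergodic d T) <->
     (exists x0 : X, is_system_support d T (fun x => x = x0))) /\
  ((exists x0 : X, is_system_support d T (fun x => x = x0)) <->
     (forall x y : X, banach_proximal d T x y)) /\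
  ((forall x y : X, banach_proximal d T x y) <->
     (forall x y : X, forall eps, 0 < eps ->
        upper_density_is (fun n => d (iter T n x) (iter T n y) < eps) 1)).
Proof.
  assert (c12 := strongly_proximal_uniquely_ergodic d Hd Hcpt T HT Hne).
  assert (c23 : proximal d T /\ uniquely_ergodic d T -> exists x0, is_system_support d T (fun x => x = x0))
    by (intros [Hp Hu]; apply (uniquely_ergodic_point_support d Hd Hcpt T HT Hne Hp Hu)).
  assert (c34 : (exists x0, is_system_support d T (fun x => x = x0)) -> forall x y, banach_proximal d T x y)
    by (intros [x0 H]; apply (point_support_banach_proximal d Hd Hcpt T HT x0 H)).
  assert (c41 := banach_proximal_strongly_proximal d Hd Hcpt T HT Hne).
  assert (c45 := banach_proximal_upper_density_one d T).
  assert (c54 := upper_density_one_banach_proximal d Hd Hcpt T HT).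
  split; [split; [auto|intro h; apply c41, c34, c23; auto]|].
  split; [split; [auto|intro h; apply c12, c41, c34; auto]|].
  split; [split; [auto|intro h; apply c23, c12, c41; auto]|].
  split; auto.
Qed.
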